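(* Let $H\in(0,1/2]$ and $\rho\in(-1,1)$. The ordinary differential equation $$g'(y)^2\left(1+2\rho\frac{y}{2H+1}+\frac{y^2}{(2H+1)^2}\right) = 1-(1-2H)\left(1-\frac{y g'(y)}{g(y)}\right),\qquad g(0)=0,\quad g'(0)>0,$$ has a unique $C^1$ solution $g$ on $\mathbb{R}$. This solution is $C^2$, satisfies, as $y\to0$, $$g(y)=g'(0)y+g''(0)\tfrac{y^2}{2}+O(y^3),\quad g'(y)=g'(0)+g''(0)y+O(y^2),\quad g''(y)=g''(0)+O(y),$$ and satisfies $g(y)/y>0$ for all $y\neq0$. *)

From Stdlib Require Import Reals.
From Coquelicot Require Import Coquelicot.
Open Scope R_scope.

Definition C1 (g : R -> R) : Prop :=
  (forall x, ex_derive g x) /\ (forall x, continuous (Derive g) x).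

Definition C2 (g : R -> R) : Prop := C1 g /\ C1 (Derive g).

(* The ODE at a point y <> 0 (where y g'(y)/g(y) must be defined, i.e. g y <> 0). *)
Definition ode_at (H rho : R) (g : R -> R) (y : R) : Prop :=
  g y <> 0 /\
  (Derive g y) ^ 2 * (1 + 2 * rho * (y / (2 * H + 1)) + y ^ 2 / (2 * H + 1) ^ 2)
  = 1 - (1 - 2 * H) * (1 - y * Derive g y / g y).

Definition is_solution (H rho : R) (g : R -> R) : Prop :=
  C1 g /\ g 0 = 0 /\ 0 < Derive g 0 /\
  (forall y, y <> 0 -> ode_at H rho g y).

Definition bigO_at0 (f p : R -> R) (k : nat) : Prop :=
  exists C delta, 0 < delta /\
    forall y, Rabs y < delta -> Rabs (f y - p y) <= C * Rabs y ^ k.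

(* For y > 0 and g > 0, the equation says that g' is the positive root of the quadratic
   q(y) p^2 - (1 - 2H) (y / g) p - 2H, where q(y) = 1 + 2 rho y/(2H+1) + y^2/(2H+1)^2, and
   y |-> -g(-y) solves the same problem with rho replaced by -rho; so everything reduces to
   "half solutions" on [0, +oo).  For z = g^2 the equation reads z' = F(y, z) with F
   nondecreasing in z, and monotone Picard iteration between the sub-solution H y^2/(1+y^2) and
   the super-solution y^2/(1-rho^2) produces a half solution.  Since the positive root increases
   with y/g, sub-solutions stay below super-solutions.  This gives uniqueness and, with the
   barriers y (1 + beta y -/+ K y^2), the expansion g(y) = y + beta y^2 + O(y^3); inserting it into
   the equation and into its derivative gives the expansions of g' and g''.  Gluing the two
   halves oddly at 0 yields the solution on R, and every solution is of this form because g'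
   cannot vanish. *)

From Stdlib Require Import Reals Lra Lia FunctionalExtensionality.
From Coquelicot Require Import Coquelicot.
Open Scope R_scope.
Set Default Proof Using "All".

Lemma continuous_of_ex_derive (f : R -> R) x : ex_derive f x -> continuous f x.
Proof. exact (ex_derive_continuous (K := R_AbsRing) (V := R_NormedModule) f x). Qed.

Lemma continuity_pt_of_ex_derive (f : R -> R) x : ex_derive f x -> continuity_pt f x.
Proof. intros Hf; apply continuity_pt_filterlim, continuous_of_ex_derive, Hf. Qed.

Lemma continuous_eps (f : R -> R) x : continuous f x ->
  forall eps, 0 < eps -> exists d, 0 < d /\ forall t, Rabs (t - x) < d -> Rabs (f t - f x) < eps.
Proof.
  intros Hc eps Heps.
  destruct (proj1 (filterlim_locally f (f x)) Hc (mkposreal eps Heps)) as [d Hd].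
  exists d; split; [apply cond_pos | intros t Ht; exact (Hd t Ht)].
Qed.

Lemma locally_pos t : 0 < t -> locally t (fun u => 0 < u).
Proof.
  intros Ht; exists (mkposreal (t / 2) ltac:(lra)); intros u Hu.
  change (Rabs (u - t) < t / 2) in Hu; apply Rabs_def2 in Hu; lra.
Qed.

Lemma locally_neg t : t < 0 -> locally t (fun u => u < 0).
Proof.
  intros Ht; exists (mkposreal (- t / 2) ltac:(lra)); intros u Hu.
  change (Rabs (u - t) < - t / 2) in Hu; apply Rabs_def2 in Hu; lra.
Qed.

Lemma at_right_pos : at_right 0 (fun y => 0 < y).
Proof. exists (mkposreal 1 Rlt_0_1); intros y _ Hy; exact Hy. Qed.

Lemma at_right_lt (c : R) : 0 < c -> at_right 0 (fun y => y < c).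
Proof.
  intros Hc; exists (mkposreal c Hc); intros y Hy _.
  change (Rabs (y - 0) < c) in Hy; rewrite Rminus_0_r in Hy.
  apply Rabs_def2 in Hy; lra.
Qed.

Lemma at_right_interval (P : R -> Prop) : at_right 0 P ->
  exists Y, 0 < Y /\ forall y, 0 < y <= Y -> P y.
Proof.
  intros [d Hd]; exists (d / 2); split; [destruct d; simpl; lra |].
  intros y Hy; apply Hd; [| lra].
  change (Rabs (y - 0) < d); rewrite Rminus_0_r, Rabs_right; destruct d; simpl in *; lra.
Qed.

Lemma at_right_of_continuous (f : R -> R) a b : continuous f 0 -> a < f 0 < b ->
  at_right 0 (fun y => a < f y < b).
Proof.
  intros Hc Hab; destruct (continuous_eps f 0 Hc (Rmin (f 0 - a) (b - f 0)))
    as (d & Hd & Hf); [apply Rmin_glb_lt; lra |].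
  exists (mkposreal d Hd); intros y Hy _.
  change (Rabs (y - 0) < d) in Hy; specialize (Hf y Hy); apply Rabs_def2 in Hf.
  pose proof (Rmin_l (f 0 - a) (b - f 0)); pose proof (Rmin_r (f 0 - a) (b - f 0)); lra.
Qed.

Lemma at_right_gt_of_continuous (f : R -> R) a : continuous f 0 -> a < f 0 ->
  at_right 0 (fun y => a < f y).
Proof.
  intros Hc Ha; apply (filter_imp (fun y => a < f y < f 0 + 1)); [intros y Hy; apply Hy |].
  apply at_right_of_continuous; [exact Hc | lra].
Qed.

Lemma at_right_lt_of_continuous (f : R -> R) b : continuous f 0 -> f 0 < b ->
  at_right 0 (fun y => f y < b).
Proof.
  intros Hc Hb; apply (filter_imp (fun y => f 0 - 1 < f y < b)); [intros y Hy; apply Hy |].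
  apply at_right_of_continuous; [exact Hc | lra].
Qed.

Lemma at_right_abs_lt (h : R -> R) : filterlim h (at_right 0) (locally 0) ->
  forall e, 0 < e -> at_right 0 (fun y => Rabs (h y) < e).
Proof.
  intros Hh e He; apply (filter_imp (fun y => ball 0 e (h y)));
    [| exact (proj1 (filterlim_locally _ _) Hh (mkposreal e He))].
  intros y Hy; change (Rabs (h y - 0) < e) in Hy; rewrite Rminus_0_r in Hy; exact Hy.
Qed.

Lemma continuous_at_right (f : R -> R) : continuous f 0 -> filterlim f (at_right 0) (locally (f 0)).
Proof. apply filterlim_filter_le_1, (filter_le_within (F := locally 0) (fun u : R => 0 < u)). Qed.

Lemma is_derive_reflect (f : R -> R) y l :
  is_derive f (- y) l -> is_derive (fun t => - f (- t)) y l.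
Proof.
  intros Hf; assert (ex_derive f (- y)) by (exists l; exact Hf).
  rewrite <- (is_derive_unique _ _ _ Hf); auto_derive; [assumption |].
  change (fun x => f x) with f; ring.
Qed.

Lemma nonincreasing_of_derive_nonpos (f df : R -> R) a b : a <= b ->
  (forall x, a <= x <= b -> is_derive f x (df x)) ->
  (forall x, a < x < b -> df x <= 0) -> f b <= f a.
Proof.
  intros Hab Hd Hneg; destruct (Req_dec a b) as [<- | Hne]; [lra |].
  destruct (MVT_cor2 f df a b) as (c & Hc & Hcab); [lra | |].
  - intros c Hc; apply is_derive_Reals, Hd, Hc.
  - assert (df c * (b - a) <= 0) by (apply Rmult_le_0_r; [apply Hneg, Hcab | lra]).
    lra.
Qed.

Lemma le_of_is_derive_le (f g df dg : R -> R) y : 0 <= y ->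
  (forall x, 0 <= x <= y -> is_derive f x (df x)) -> (forall x, 0 <= x <= y -> is_derive g x (dg x)) ->
  (forall x, 0 < x < y -> df x <= dg x) -> f 0 <= g 0 -> f y <= g y.
Proof.
  intros Hy Hf Hg Hle H0.
  assert (f y - g y <= f 0 - g 0); [| lra].
  apply (nonincreasing_of_derive_nonpos (fun x => f x - g x) (fun x => df x - dg x)); [exact Hy | |].
  - intros x Hx; apply (is_derive_minus f g); [apply Hf | apply Hg]; exact Hx.
  - intros x Hx; pose proof (Hle x Hx); lra.
Qed.

Lemma is_lim_seq_dist_le (a : nat -> R) (l L e : R) N : is_lim_seq a l ->
  (forall n, (N <= n)%nat -> Rabs (a n - L) <= e) -> Rabs (l - L) <= e.
Proof.
  intros Ha Hb; apply (is_lim_seq_incr_n a N) in Ha.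
  assert (Hlo : Rbar_le (L - e) l).
  { apply (is_lim_seq_le (fun _ => L - e) (fun n => a (n + N)%nat));
      [| apply is_lim_seq_const | exact Ha].
    intros n; specialize (Hb (n + N)%nat ltac:(lia)); apply Rabs_le_between in Hb; lra. }
  assert (Hhi : Rbar_le l (L + e)).
  { apply (is_lim_seq_le (fun n => a (n + N)%nat) (fun _ => L + e));
      [| exact Ha | apply is_lim_seq_const].
    intros n; specialize (Hb (n + N)%nat ltac:(lia)); apply Rabs_le_between in Hb; lra. }
  simpl in Hlo, Hhi; apply Rabs_le; lra.
Qed.

Section MonotoneIteration.

Variable F : R -> R -> R.
Variables u v du dv : R -> R.
Hypothesis F_cont : forall y z, continuity_2d_pt F y z.
Hypothesis F_mono : forall y z1 z2, 0 <= y -> z1 <= z2 -> F y z1 <= F y z2.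
Hypothesis u_der : forall t, is_derive u t (du t).
Hypothesis v_der : forall t, is_derive v t (dv t).
Hypothesis u_sub : forall t, 0 <= t -> du t <= F t (u t).
Hypothesis v_super : forall t, 0 <= t -> F t (v t) <= dv t.
Hypothesis u0_le : u 0 <= 0.
Hypothesis v0_ge : 0 <= v 0.
Hypothesis u_le_v : forall t, 0 <= t -> u t <= v t.

Lemma continuous_F_along (w : R -> R) y :
  continuous w y -> continuous (fun t => F t (w t)) y.
Proof.
  intros Hw; apply (continuous_comp_2 (fun t => t) w F); [apply continuous_id | exact Hw |].
  apply continuity_2d_pt_filterlim, F_cont.
Qed.

Lemma primitive_F_along (w : R -> R) y : (forall t, continuous w t) ->
  is_derive (fun x => RInt (fun t => F t (w t)) 0 x) y (F y (w y)).
Proof.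
  intros Hw; apply (is_derive_RInt (fun t => F t (w t)) _ 0).
  - exists (mkposreal 1 Rlt_0_1); intros b _.
    apply (RInt_correct (V := R_CompleteNormedModule)),
      (ex_RInt_continuous (V := R_CompleteNormedModule)).
    intros t _; apply continuous_F_along, Hw.
  - apply continuous_F_along, Hw.
Qed.

Lemma RInt_F_along_le (w1 w2 : R -> R) y : 0 <= y ->
  (forall t, continuous w1 t) -> (forall t, continuous w2 t) ->
  (forall t, 0 <= t -> w1 t <= w2 t) ->
  RInt (fun t => F t (w1 t)) 0 y <= RInt (fun t => F t (w2 t)) 0 y.
Proof.
  intros Hy H1 H2 H12; apply RInt_le; [exact Hy | | | intros t Ht; apply F_mono, H12; lra];
    apply (ex_RInt_continuous (V := R_CompleteNormedModule));
    intros t _; apply continuous_F_along; auto.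
Qed.

Lemma u_cont t : continuous u t.
Proof. apply continuous_of_ex_derive; eexists; apply u_der. Qed.

Lemma v_cont t : continuous v t.
Proof. apply continuous_of_ex_derive; eexists; apply v_der. Qed.

Lemma u_le_RInt y : 0 <= y -> u y <= RInt (fun t => F t (u t)) 0 y.
Proof.
  intros Hy; apply (le_of_is_derive_le _ _ du (fun x => F x (u x))); [exact Hy | | | |].
  - intros x _; apply u_der.
  - intros x _; apply primitive_F_along, u_cont.
  - intros x Hx; apply u_sub; lra.
  - rewrite RInt_point; exact u0_le.
Qed.

Lemma RInt_le_v y : 0 <= y -> RInt (fun t => F t (v t)) 0 y <= v y.
Proof.
  intros Hy; apply (le_of_is_derive_le _ _ (fun x => F x (v x)) dv); [exact Hy | | | |].
  - intros x _; apply primitive_F_along, v_cont.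
  - intros x _; apply v_der.
  - intros x Hx; apply v_super; lra.
  - rewrite RInt_point; exact v0_ge.
Qed.

Fixpoint picard (n : nat) : R -> R :=
  match n with
  | O => u
  | S m => fun y => RInt (fun t => F t (picard m t)) 0 y
  end.

Lemma picard_cont n t : continuous (picard n) t.
Proof.
  revert t; induction n as [| n IH]; intros t; [apply u_cont |].
  apply continuous_of_ex_derive; eexists; apply primitive_F_along, IH.
Qed.

Lemma picard_der n y : is_derive (picard (S n)) y (F y (picard n y)).
Proof. apply primitive_F_along, picard_cont. Qed.

Lemma picard_le_succ n y : 0 <= y -> picard n y <= picard (S n) y.
Proof.
  revert y; induction n as [| n IH]; intros y Hy; [apply u_le_RInt, Hy |].
  apply (RInt_F_along_le (picard n) (picard (S n))); auto using picard_cont.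
Qed.

Lemma picard_le_v n y : 0 <= y -> picard n y <= v y.
Proof.
  revert y; induction n as [| n IH]; intros y Hy; [apply u_le_v, Hy |].
  eapply Rle_trans; [| apply RInt_le_v, Hy].
  apply (RInt_F_along_le (picard n) v); auto using picard_cont, v_cont.
Qed.

Lemma u_le_picard n y : 0 <= y -> u y <= picard n y.
Proof.
  induction n as [| n IH]; intros Hy; [apply Rle_refl |].
  eapply Rle_trans; [apply IH, Hy | apply picard_le_succ, Hy].
Qed.

Definition picard_lim (y : R) : R := real (Lim_seq (fun n => picard n y)).

Lemma picard_cvg y : 0 <= y -> is_lim_seq (fun n => picard n y) (picard_lim y).
Proof.
  intros Hy; unfold picard_lim; apply Lim_seq_correct', (ex_finite_lim_seq_incr _ (v y)).
  - intros n; apply picard_le_succ, Hy.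
  - intros n; apply picard_le_v, Hy.
Qed.

Lemma picard_lim_bounds y : 0 <= y -> u y <= picard_lim y <= v y.
Proof.
  intros Hy; pose proof (picard_cvg y Hy) as Hl; split.
  - apply (Rle_trans _ (picard 0 y)); [apply Rle_refl |].
    apply (is_lim_seq_incr_compare _ _ Hl); intros n; apply picard_le_succ, Hy.
  - assert (Hle := is_lim_seq_le _ (fun _ => v y) _ (v y)
      (fun n => picard_le_v n y Hy) Hl (is_lim_seq_const _)); exact Hle.
Qed.

Lemma picard_lim_0 : picard_lim 0 = 0.
Proof.
  assert (Hl := picard_cvg 0 (Rle_refl 0)); apply is_lim_seq_incr_1 in Hl.
  assert (H0 : is_lim_seq (fun n => picard (S n) 0) 0).
  { apply (is_lim_seq_ext (fun _ => 0)); [| apply is_lim_seq_const].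
    intros n; symmetry; apply (RInt_point (V := R_CompleteNormedModule)). }
  apply is_lim_seq_unique in Hl; apply is_lim_seq_unique in H0; rewrite Hl in H0; now injection H0.
Qed.

(* Every iterate lies between [u] and [v], and [F] is monotone in its second argument. *)
Lemma picard_slopes_bounded y : 0 < y -> exists r M, 0 < r <= y / 2 /\ 1 <= M /\
  forall n t, Rabs (t - y) < r -> Rabs (F t (picard n t)) <= M.
Proof.
  intros Hy.
  destruct (continuous_eps _ y (continuous_F_along v y (v_cont y)) 1 Rlt_0_1) as (dv' & Hdv & Hv).
  destruct (continuous_eps _ y (continuous_F_along u y (u_cont y)) 1 Rlt_0_1) as (du' & Hdu & Hu).
  assert (Hr : 0 < Rmin (Rmin dv' du') (y / 2)) by (repeat apply Rmin_glb_lt; lra).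
  pose proof (Rmin_l (Rmin dv' du') (y / 2)); pose proof (Rmin_r (Rmin dv' du') (y / 2)).
  pose proof (Rmin_l dv' du'); pose proof (Rmin_r dv' du').
  exists (Rmin (Rmin dv' du') (y / 2)), (Rabs (F y (v y)) + Rabs (F y (u y)) + 1).
  split; [split; lra |]; split;
    [pose proof (Rabs_pos (F y (v y))); pose proof (Rabs_pos (F y (u y))); lra |].
  intros n t Ht.
  assert (Ht0 : 0 <= t) by (apply Rabs_def2 in Ht; lra).
  pose proof (F_mono t _ _ Ht0 (u_le_picard n t Ht0)).
  pose proof (F_mono t _ _ Ht0 (picard_le_v n t Ht0)).
  specialize (Hv t ltac:(lra)); specialize (Hu t ltac:(lra)).
  apply Rabs_def2 in Hv; apply Rabs_def2 in Hu.
  pose proof (Rle_abs (F y (v y))); pose proof (Rle_abs (- F y (u y))); rewrite Rabs_Ropp in *.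
  pose proof (Rabs_pos (F y (v y))); pose proof (Rabs_pos (F y (u y))).
  apply Rabs_le; split; lra.
Qed.

Lemma picard_lipschitz y r M n t1 t2 : 0 < r ->
  (forall n t, Rabs (t - y) < r -> Rabs (F t (picard n t)) <= M) ->
  Rabs (t1 - y) < r -> Rabs (t2 - y) < r ->
  Rabs (picard (S n) t2 - picard (S n) t1) <= M * Rabs (t2 - t1).
Proof.
  intros Hr HM H1 H2.
  destruct (MVT_gen (picard (S n)) t1 t2 (fun c => F c (picard n c))) as (c & Hc & ->).
  - intros x _; apply picard_der.
  - intros x _; apply continuity_pt_filterlim, picard_cont.
  - rewrite Rabs_mult; apply Rmult_le_compat_r; [apply Rabs_pos | apply HM].
    apply Rabs_def2 in H1; apply Rabs_def2 in H2; destruct Hc as [Hc1 Hc2].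
    pose proof (Rmin_l t1 t2); pose proof (Rmax_l t1 t2).
    pose proof (Rmin_r t1 t2); pose proof (Rmax_r t1 t2).
    apply Rabs_def1.
    + assert (Rmax t1 t2 < y + r) by (apply Rmax_lub_lt; lra); lra.
    + assert (y - r < Rmin t1 t2) by (apply Rmin_glb_lt; lra); lra.
Qed.

Lemma picard_quotient_slope y r M n h : 0 < r ->
  (forall n t, Rabs (t - y) < r -> Rabs (F t (picard n t)) <= M) -> h <> 0 -> Rabs h < r ->
  exists c, Rabs (c - y) <= Rabs h /\ Rabs (picard (S n) c - picard (S n) y) <= M * Rabs h /\
    (picard (S (S n)) (y + h) - picard (S (S n)) y) / h = F c (picard (S n) c).
Proof.
  intros Hr Hbound Hh0 Hh.
  destruct (MVT_gen (picard (S (S n))) y (y + h) (fun c => F c (picard (S n) c))) as (c & Hc & Hmvt).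
  - intros x _; apply picard_der.
  - intros x _; apply continuity_pt_filterlim, picard_cont.
  - assert (Hcy : Rabs (c - y) <= Rabs h).
    { destruct (Rle_dec 0 h).
      - rewrite Rmin_left, Rmax_right in Hc by lra; rewrite !Rabs_right; lra.
      - rewrite Rmin_right, Rmax_left in Hc by lra; rewrite Rabs_left1, (Rabs_left h); lra. }
    assert (HM : 0 <= M).
    { apply (Rle_trans _ (Rabs (F y (picard 0 y)))); [apply Rabs_pos |].
      apply Hbound; rewrite Rminus_diag, Rabs_R0; lra. }
    exists c; split; [exact Hcy | split].
    + eapply Rle_trans;
        [apply (picard_lipschitz y r M n y c Hr Hbound); [rewrite Rminus_diag, Rabs_R0 |]; lra |].
      apply Rmult_le_compat_l; assumption.
    + rewrite Hmvt; field; exact Hh0.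
Qed.

Lemma picard_cvg_SS y : 0 <= y -> is_lim_seq (fun n => picard (S (S n)) y) (picard_lim y).
Proof.
  intros Hy; apply (proj1 (is_lim_seq_incr_1 (fun m => picard (S m) y) _)),
    (proj1 (is_lim_seq_incr_1 (fun m => picard m y) _)), picard_cvg, Hy.
Qed.

(* The difference quotients of the iterates are slopes [F c (picard n c)] with [c] close to [y]
   and [picard n c] close to [picard_lim y], uniformly in [n]; the estimate passes to the limit. *)
Lemma picard_lim_der y : 0 < y -> is_derive picard_lim y (F y (picard_lim y)).
Proof.
  intros Hy; apply is_derive_Reals; intros eps Heps.
  destruct (picard_slopes_bounded y Hy) as (r & M & Hr & HM & Hbound).
  assert (Heps2 : 0 < eps / 2) by lra.
  destruct (F_cont y (picard_lim y) (mkposreal _ Heps2)) as [d Hd].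
  destruct (proj1 (is_lim_seq_Reals _ _) (picard_cvg y ltac:(lra)) (d / 2)) as [N HN];
    [destruct d; simpl; lra |].
  assert (Hdel : 0 < Rmin r (d / (2 * M)))
    by (apply Rmin_glb_lt; [lra | apply Rdiv_lt_0_compat; [apply cond_pos | lra]]).
  exists (mkposreal _ Hdel); intros h Hh0 Hh; simpl in Hh.
  pose proof (Rmin_l r (d / (2 * M))); pose proof (Rmin_r r (d / (2 * M))).
  assert (HMh : Rabs h <= M * Rabs h <= d / 2).
  { split; [pose proof (Rabs_pos h); nra |].
    apply (Rmult_le_reg_r (/ M)); [apply Rinv_0_lt_compat; lra |].
    replace (M * Rabs h * / M) with (Rabs h) by (field; lra).
    replace (d / 2 * / M) with (d / (2 * M)) by (field; lra); lra. }
  assert (Hq : forall n, (N <= n)%nat ->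
    Rabs ((picard (S (S n)) (y + h) - picard (S (S n)) y) / h - F y (picard_lim y)) <= eps / 2).
  { intros n Hn; destruct (picard_quotient_slope y r M n h (proj1 Hr) Hbound Hh0 ltac:(lra))
      as (c & Hcy & Hlip & ->).
    specialize (HN (S n) ltac:(lia)); unfold Rdist in HN.
    pose proof (cond_pos d); left; apply Hd; [lra |].
    replace (picard (S n) c - picard_lim y)
      with ((picard (S n) c - picard (S n) y) + (picard (S n) y - picard_lim y)) by ring.
    eapply Rle_lt_trans; [apply Rabs_triang | lra]. }
  assert (Hlim : is_lim_seq (fun n => (picard (S (S n)) (y + h) - picard (S (S n)) y) / h)
    ((picard_lim (y + h) - picard_lim y) / h)).
  { apply (is_lim_seq_div' _ (fun _ => h)); [| apply is_lim_seq_const | exact Hh0].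
    apply (is_lim_seq_minus' _ _ (picard_lim (y + h)) (picard_lim y));
      apply picard_cvg_SS; apply Rabs_def2 in Hh; lra. }
  pose proof (is_lim_seq_dist_le _ _ _ _ N Hlim Hq); lra.
Qed.

Theorem monotone_iteration_solution : exists z : R -> R, z 0 = 0 /\
  (forall y, 0 <= y -> u y <= z y <= v y) /\ (forall y, 0 < y -> is_derive z y (F y (z y))).
Proof.
  exists picard_lim; split; [exact picard_lim_0 |].
  split; [exact picard_lim_bounds | exact picard_lim_der].
Qed.

End MonotoneIteration.

Definition quad_residual (q c b k p : R) : R := q * p ^ 2 - c * k * p - b.

Definition quad_root (q c b k : R) : R := (c * k + sqrt ((c * k) ^ 2 + 4 * q * b)) / (2 * q).

Lemma quad_residual_root q c b k : 0 < q -> 0 <= b ->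
  quad_residual q c b k (quad_root q c b k) = 0.
Proof.
  intros Hq Hb; unfold quad_residual, quad_root.
  assert (HD : 0 <= (c * k) ^ 2 + 4 * q * b) by (pose proof (pow2_ge_0 (c * k)); nra).
  pose proof (sqrt_sqrt _ HD) as HS; set (S := sqrt _) in HS |- *.
  replace (q * ((c * k + S) / (2 * q)) ^ 2 - c * k * ((c * k + S) / (2 * q)) - b)
    with ((S * S - (c * k) ^ 2 - 4 * q * b) / (4 * q)) by (field; lra).
  rewrite HS; field; lra.
Qed.

Lemma le_quad_root q c b k p : 0 < q -> 0 <= b ->
  quad_residual q c b k p <= 0 -> p <= quad_root q c b k.
Proof.
  unfold quad_residual, quad_root; intros Hq Hb Hp.
  assert (2 * q * p - c * k <= sqrt ((c * k) ^ 2 + 4 * q * b)).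
  { apply Rsqr_incr_0_var; [| apply sqrt_pos]; rewrite Rsqr_sqrt by nra; unfold Rsqr; nra. }
  apply (Rmult_le_reg_r (2 * q)); [lra |]; field_simplify; lra.
Qed.

Lemma quad_root_le q c b k p : 0 < q -> 0 <= b -> c * k <= 2 * q * p ->
  0 <= quad_residual q c b k p -> quad_root q c b k <= p.
Proof.
  unfold quad_residual, quad_root; intros Hq Hb Hv Hp.
  assert (sqrt ((c * k) ^ 2 + 4 * q * b) <= 2 * q * p - c * k).
  { rewrite <- (sqrt_pow2 (2 * q * p - c * k)) by lra; apply sqrt_le_1_alt; nra. }
  apply (Rmult_le_reg_r (2 * q)); [lra |]; field_simplify; lra.
Qed.

Lemma quad_root_unique q c b k p : 0 < q -> 0 <= b -> 0 < p ->
  quad_residual q c b k p = 0 -> p = quad_root q c b k.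
Proof.
  intros Hq Hb Hp H0; apply Rle_antisym; [apply le_quad_root; lra |].
  apply quad_root_le; [assumption | assumption | | lra].
  unfold quad_residual in H0; assert (0 <= q * p ^ 2) by (pose proof (pow2_ge_0 p); nra); nra.
Qed.

Lemma quad_root_pos q c b k : 0 < q -> 0 < b -> 0 < quad_root q c b k.
Proof.
  intros Hq Hb; unfold quad_root; apply Rdiv_lt_0_compat; [| lra].
  assert (Rabs (c * k) < sqrt ((c * k) ^ 2 + 4 * q * b)).
  { rewrite <- sqrt_Rsqr_abs; apply sqrt_lt_1_alt; split; [apply Rle_0_sqr |].
    unfold Rsqr; simpl; nra. }
  pose proof (Rle_abs (- (c * k))); rewrite Rabs_Ropp in *; lra.
Qed.

Lemma quad_root_le_compat q c b1 b2 k : 0 < q -> b1 <= b2 ->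
  quad_root q c b1 k <= quad_root q c b2 k.
Proof.
  intros Hq Hb; unfold quad_root, Rdiv; apply Rmult_le_compat_r; [left; apply Rinv_0_lt_compat; lra |].
  apply Rplus_le_compat_l, sqrt_le_1_alt; nra.
Qed.

(* The positive root of [q p^2 - c k p - b] increases with [k]. *)
Lemma quad_residual_sub_le_super q c b k1 k2 p1 p2 : 0 < q -> 0 < b -> 0 <= c ->
  k1 <= k2 -> 0 < p2 ->
  quad_residual q c b k1 p1 <= 0 -> 0 <= quad_residual q c b k2 p2 -> p1 <= p2.
Proof.
  unfold quad_residual; intros Hq Hb Hc Hk Hp2 H1 H2.
  destruct (Rle_lt_dec p1 p2) as [| Hlt]; [assumption | exfalso].
  assert (c * k1 * p1 <= c * k2 * p1)
    by (apply Rmult_le_compat_r; [lra | apply Rmult_le_compat_l; lra]).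
  assert ((q * p1 ^ 2 - b) * p2 <= c * k2 * p1 * p2) by (apply Rmult_le_compat_r; lra).
  assert (c * k2 * p2 * p1 <= (q * p2 ^ 2 - b) * p1) by (apply Rmult_le_compat_r; lra).
  assert (0 < (p1 - p2) * (q * p1 * p2 + b)).
  { apply Rmult_lt_0_compat; [lra |].
    assert (0 < q * p1 * p2) by (repeat apply Rmult_lt_0_compat; lra); lra. }
  nra.
Qed.

Lemma last_crossing (phi : R -> R) a b c : a <= b ->
  (forall t, a <= t <= b -> continuous phi t) -> phi a <= c -> c < phi b ->
  exists t0, a <= t0 < b /\ phi t0 <= c /\ forall t, t0 < t <= b -> c < phi t.
Proof.
  intros Hab Hc Ha Hb.
  set (S t := a <= t <= b /\ phi t <= c).
  destruct (completeness S) as (t0 & Hub & Hlub).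
  { exists b; intros t [Ht _]; lra. }
  { exists a; split; [lra | exact Ha]. }
  assert (Ht0 : a <= t0 <= b).
  { split; [apply Hub; split; [lra | exact Ha] | apply Hlub; intros t [Ht _]; lra]. }
  assert (Hafter : forall t, t0 < t <= b -> c < phi t).
  { intros t Ht; destruct (Rlt_le_dec c (phi t)) as [| Hle]; [assumption |].
    assert (t <= t0) by (apply Hub; split; [lra | exact Hle]); lra. }
  assert (Hphi0 : phi t0 <= c).
  { destruct (Rle_lt_dec (phi t0) c) as [| Hgt]; [assumption | exfalso].
    destruct (continuous_eps phi t0 (Hc t0 Ht0) (phi t0 - c)) as (d & Hd & Hnear); [lra |].
    assert (t0 <= t0 - d / 2); [| lra].
    apply Hlub; intros s [Hs Hps].
    destruct (Rle_lt_dec s (t0 - d / 2)) as [| Hlt]; [assumption | exfalso].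
    assert (s <= t0) by (apply Hub; split; assumption).
    specialize (Hnear s ltac:(apply Rabs_def1; lra)); apply Rabs_def2 in Hnear; lra. }
  exists t0; split; [| split; assumption].
  split; [lra |]; destruct (Req_dec t0 b) as [-> | ]; lra.
Qed.

(* Otherwise [phi] would have to increase from its last crossing of [phi y1 / 2] up to [phi y1]. *)
Lemma nonpos_of_Derive_nonpos_where_pos (phi : R -> R) Y : phi 0 <= 0 ->
  (forall e, 0 < e -> at_right 0 (fun y => phi y < e)) ->
  (forall y, 0 < y <= Y -> ex_derive phi y) ->
  (forall y, 0 < y <= Y -> 0 < phi y -> Derive phi y <= 0) ->
  forall y, 0 <= y <= Y -> phi y <= 0.
Proof.
  intros H0 Hright Hder Hdec y1 Hy1.
  destruct (Rle_lt_dec (phi y1) 0) as [| Hpos]; [assumption | exfalso].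
  assert (Hy1p : 0 < y1) by (destruct (Req_dec y1 0) as [-> |]; lra).
  destruct (at_right_interval _ (Hright (phi y1 / 2) ltac:(lra))) as (d & Hd & Hsmall).
  set (t1 := Rmin d y1 / 2).
  assert (Ht1 : 0 < t1 < y1 /\ t1 <= d).
  { pose proof (Rmin_l d y1); pose proof (Rmin_r d y1).
    assert (0 < Rmin d y1) by (apply Rmin_glb_lt; lra); unfold t1; lra. }
  destruct (last_crossing phi t1 y1 (phi y1 / 2)) as (t0 & Ht0 & Hphi0 & Hafter).
  - lra.
  - intros t Ht; apply continuous_of_ex_derive, Hder; lra.
  - left; apply Hsmall; lra.
  - lra.
  - assert (Hmono : phi y1 <= phi t0).
    { apply (nonincreasing_of_derive_nonpos phi (Derive phi)); [lra | |].
      - intros x Hx; apply Derive_correct, Hder; lra.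
      - intros x Hx; apply Hdec; [lra |]; pose proof (Hafter x ltac:(lra)); lra. }
    lra.
Qed.

Lemma quad_ode_comparison (q : R -> R) b c (h1 h2 : R -> R) Y :
  0 < b -> 0 <= c -> (forall y, 0 < q y) -> h1 0 = 0 -> h2 0 = 0 ->
  filterlim h1 (at_right 0) (locally 0) -> filterlim h2 (at_right 0) (locally 0) ->
  (forall y, 0 < y <= Y -> 0 < h1 y /\ 0 < h2 y /\ ex_derive h1 y /\ ex_derive h2 y /\
    quad_residual (q y) c b (y / h1 y) (Derive h1 y) <= 0 /\
    0 < Derive h2 y /\ 0 <= quad_residual (q y) c b (y / h2 y) (Derive h2 y)) ->
  forall y, 0 <= y <= Y -> h1 y <= h2 y.
Proof.
  intros Hb Hc Hq H10 H20 Hlim1 Hlim2 Hy y Hyy.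
  cut (h1 y - h2 y <= 0); [lra |].
  apply (nonpos_of_Derive_nonpos_where_pos (fun t => h1 t - h2 t) Y); [lra | | | | exact Hyy].
  - intros e He.
    apply (filter_imp (fun t => Rabs (h1 t) < e / 2 /\ Rabs (h2 t) < e / 2));
      [| apply filter_and; apply at_right_abs_lt; auto; lra].
    intros t [A1 A2]; apply Rabs_def2 in A1; apply Rabs_def2 in A2; lra.
  - intros t Ht; destruct (Hy t Ht) as (_ & _ & D1 & D2 & _); apply (ex_derive_minus h1 h2); assumption.
  - intros t Ht Hpos; destruct (Hy t Ht) as (P1 & P2 & D1 & D2 & S1 & Q2 & S2).
    rewrite Derive_minus by assumption.
    cut (Derive h1 t <= Derive h2 t); [lra |].
    apply (quad_residual_sub_le_super (q t) c b (t / h1 t) (t / h2 t)); try assumption; [apply Hq |].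
    apply Rmult_le_compat_l; [lra |]; apply Rinv_le_contravar; lra.
Qed.

Definition bigO_right (f : R -> R) (k : nat) : Prop :=
  exists C, at_right 0 (fun y => Rabs (f y) <= C * y ^ k).

Lemma bigO_right_ext (f g : R -> R) k : at_right 0 (fun y => f y = g y) ->
  bigO_right f k -> bigO_right g k.
Proof.
  intros Hfg [C HC]; exists C; refine (filter_imp _ _ _ (filter_and _ _ HC Hfg)).
  intros y [A E]; rewrite <- E; exact A.
Qed.

Lemma bigO_right_plus (f g : R -> R) k : bigO_right f k -> bigO_right g k ->
  bigO_right (fun y => f y + g y) k.
Proof.
  intros [C1 H1] [C2 H2]; exists (C1 + C2).
  refine (filter_imp _ _ _ (filter_and _ _ H1 H2)); intros y [A1 A2].
  eapply Rle_trans; [apply Rabs_triang | lra].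
Qed.

Lemma bigO_right_opp (f : R -> R) k : bigO_right f k -> bigO_right (fun y => - f y) k.
Proof.
  intros [C HC]; exists C; refine (filter_imp _ _ _ HC); intros y Hy.
  rewrite Rabs_Ropp; exact Hy.
Qed.

Lemma bigO_right_minus (f g : R -> R) k : bigO_right f k -> bigO_right g k ->
  bigO_right (fun y => f y - g y) k.
Proof. intros Hf Hg; apply (bigO_right_plus f (fun y => - g y)), bigO_right_opp; assumption. Qed.

Lemma bigO_right_mult (f g : R -> R) k l : bigO_right f k -> bigO_right g l ->
  bigO_right (fun y => f y * g y) (k + l).
Proof.
  intros [C1 H1] [C2 H2]; exists (C1 * C2).
  refine (filter_imp _ _ _ (filter_and _ _ H1 H2)); intros y [A1 A2].
  rewrite Rabs_mult, pow_add.
  replace (C1 * C2 * (y ^ k * y ^ l)) with ((C1 * y ^ k) * (C2 * y ^ l)) by ring.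
  apply Rmult_le_compat; auto using Rabs_pos.
Qed.

Lemma bigO_right_pow k : bigO_right (fun y => y ^ k) k.
Proof.
  exists 1; exists (mkposreal 1 Rlt_0_1); intros y _ Hy.
  rewrite Rmult_1_l, Rabs_right; [apply Rle_refl | apply Rle_ge, pow_le; lra].
Qed.

Lemma bigO_right_continuous (f : R -> R) : continuous f 0 -> bigO_right f 0.
Proof.
  intros Hf; exists (Rabs (f 0) + 1).
  apply (filter_imp (fun y => f 0 - 1 < f y < f 0 + 1));
    [| apply at_right_of_continuous; [exact Hf | lra]].
  intros y Hy; simpl; rewrite Rmult_1_r.
  pose proof (Rle_abs (f 0)); pose proof (Rle_abs (- f 0)); rewrite Rabs_Ropp in *.
  apply Rabs_le; split; lra.
Qed.

Lemma bigO_right_const c : bigO_right (fun _ => c) 0.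
Proof. apply bigO_right_continuous, continuous_const. Qed.

Lemma bigO_right_S (f : R -> R) k : bigO_right f (S k) -> bigO_right f k.
Proof.
  intros [C HC]; exists (Rabs C).
  refine (filter_imp _ _ _
    (filter_and _ _ HC (filter_and _ _ (at_right_lt 1 Rlt_0_1) at_right_pos))).
  intros y [A1 [Hy1 Hy0]]; eapply Rle_trans; [exact A1 |]; simpl.
  assert (0 <= y ^ k) by (apply pow_le; lra).
  pose proof (Rle_abs C); pose proof (Rabs_pos C).
  replace (C * (y * y ^ k)) with (C * y * y ^ k) by ring.
  apply Rmult_le_compat_r; [assumption | nra].
Qed.

Lemma bigO_right_div_id (f : R -> R) k : bigO_right f (S k) -> bigO_right (fun y => f y / y) k.
Proof.
  intros [C HC]; exists C; refine (filter_imp _ _ _ (filter_and _ _ HC at_right_pos)).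
  intros y [A Hy]; unfold Rdiv; rewrite Rabs_mult, Rabs_inv, (Rabs_right y) by lra.
  apply (Rmult_le_reg_r y); [exact Hy |].
  rewrite Rmult_assoc, Rinv_l, Rmult_1_r by lra; simpl in A; lra.
Qed.

Lemma bigO_right_div (f g : R -> R) k m : bigO_right f k -> 0 < m ->
  at_right 0 (fun y => m <= g y) -> bigO_right (fun y => f y / g y) k.
Proof.
  intros [C HC] Hm Hg; exists (C / m); refine (filter_imp _ _ _ (filter_and _ _ HC Hg)).
  intros y [A Hy]; unfold Rdiv; rewrite Rabs_mult, Rabs_inv, (Rabs_right (g y)) by lra.
  apply (Rmult_le_reg_r (g y)); [lra |].
  rewrite Rmult_assoc, Rinv_l, Rmult_1_r by lra.
  replace (C * / m * y ^ k * g y) with (C * y ^ k * (g y / m)) by (field; lra).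
  assert (1 <= g y / m) by (apply (Rmult_le_reg_r m); [lra |]; field_simplify; lra).
  pose proof (Rabs_pos (f y)); nra.
Qed.

Lemma bigO_right_weaken (f : R -> R) k l : (k <= l)%nat -> bigO_right f l -> bigO_right f k.
Proof. induction 1; auto using bigO_right_S. Qed.

Lemma bigO_right_small (f : R -> R) k : bigO_right f (S k) ->
  forall e, 0 < e -> at_right 0 (fun y => Rabs (f y) < e).
Proof.
  intros Hf e He; destruct (bigO_right_weaken f 1 (S k) ltac:(lia) Hf) as [C HC].
  assert (HeC : 0 < e / (Rabs C + 1)) by (apply Rdiv_lt_0_compat; [| pose proof (Rabs_pos C)]; lra).
  refine (filter_imp _ _ _ (filter_and _ _ HC (filter_and _ _ (at_right_lt _ HeC) at_right_pos))).
  intros y [A [Hy Hy0]]; simpl in A; rewrite Rmult_1_r in A.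
  apply (Rmult_lt_compat_r (Rabs C + 1)) in Hy; [| pose proof (Rabs_pos C); lra].
  replace (e / (Rabs C + 1) * (Rabs C + 1)) with e in Hy by (field; pose proof (Rabs_pos C); lra).
  pose proof (Rle_abs C); nra.
Qed.

Lemma bigO_right_filterlim (f : R -> R) k : bigO_right f (S k) -> filterlim f (at_right 0) (locally 0).
Proof.
  intros Hf; apply filterlim_locally; intros eps.
  refine (filter_imp _ _ _ (bigO_right_small f k Hf eps (cond_pos eps))).
  intros y Hy; change (Rabs (f y - 0) < eps); rewrite Rminus_0_r; exact Hy.
Qed.

Ltac bigO_right_bounded :=
  lazymatch goal with
  | |- bigO_right (fun y => @?f y + @?g y) 0 => apply (bigO_right_plus f g); bigO_right_bounded
  | |- bigO_right (fun y => @?f y - @?g y) 0 => apply (bigO_right_minus f g); bigO_right_bounded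
  | |- bigO_right (fun y => @?f y * @?g y) 0 => apply (bigO_right_mult f g 0 0); bigO_right_bounded
  | |- bigO_right (fun y => - @?f y) 0 => apply (bigO_right_opp f); bigO_right_bounded
  | |- _ => first [assumption | apply bigO_right_const |
                  apply bigO_right_continuous; first [assumption | apply continuous_id]]
  end.

Lemma bigO_right_id : bigO_right (fun y => y) 1.
Proof.
  apply (bigO_right_ext (fun y => y ^ 1)); [apply filter_forall; intros; apply pow_1 | apply bigO_right_pow].
Qed.

Lemma bigO_right_scal_id c : bigO_right (fun y => c * y) 1.
Proof. apply (bigO_right_mult (fun _ => c) (fun y => y) 0 1); [apply bigO_right_const | apply bigO_right_id]. Qed.

Definition qcoef (H rho y : R) : R :=
  1 + 2 * rho * (y / (2 * H + 1)) + y ^ 2 / (2 * H + 1) ^ 2.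

Definition residual (H rho y w p : R) : R :=
  quad_residual (qcoef H rho y) (1 - 2 * H) (2 * H) (y / w) p.

Definition half_solution (H rho : R) (h : R -> R) : Prop :=
  h 0 = 0 /\ filterlim h (at_right 0) (locally 0) /\
  forall y, 0 < y -> 0 < h y /\ ex_derive h y /\ 0 < Derive h y /\
    residual H rho y (h y) (Derive h y) = 0.

Lemma qcoef_opp H rho y : qcoef H (- rho) (- y) = qcoef H rho y.
Proof. unfold qcoef, Rdiv; ring. Qed.

Lemma residual_opp H rho y w p : residual H (- rho) (- y) (- w) p = residual H rho y w p.
Proof.
  unfold residual; rewrite qcoef_opp; destruct (Req_dec w 0) as [-> |];
    [rewrite Ropp_0, !Rdiv_0_r | replace (- y / - w) with (y / w) by (field; assumption)]; reflexivity.
Qed.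

Lemma qcoef_ge H rho y : 0 < H -> 1 - rho ^ 2 <= qcoef H rho y.
Proof.
  intros hH; unfold qcoef; set (w := y / (2 * H + 1)).
  replace (y ^ 2 / (2 * H + 1) ^ 2) with (w ^ 2) by (unfold w; field; lra).
  pose proof (pow2_ge_0 (rho + w)); nra.
Qed.

Lemma qcoef_pos H rho y : 0 < H -> -1 < rho < 1 -> 0 < qcoef H rho y.
Proof. intros hH hrho; pose proof (qcoef_ge H rho y hH); nra. Qed.

Lemma qcoef_le H rho y : 0 < H -> -1 < rho < 1 -> qcoef H rho y <= 2 * (1 + y ^ 2).
Proof.
  intros hH hrho; unfold qcoef; set (w := y / (2 * H + 1)).
  replace (y ^ 2 / (2 * H + 1) ^ 2) with (w ^ 2) by (unfold w; field; lra).
  assert (w ^ 2 <= y ^ 2).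
  { replace (y ^ 2) with (w ^ 2 * (2 * H + 1) ^ 2) by (unfold w; field; lra).
    pose proof (pow2_ge_0 w); nra. }
  pose proof (pow2_ge_0 (1 - w)); pose proof (pow2_ge_0 (1 + w)); nra.
Qed.

Lemma qcoef_ex_derive H rho y : ex_derive (qcoef H rho) y.
Proof. unfold qcoef; auto_derive; lra. Qed.

(* With [z = h^2] the equation for a half solution becomes [z' = zrhs y z], the positive root
   of [q w^2 - 2 (1 - 2H) y w - 8 H z]. *)
Definition zrhs (H rho y z : R) : R := quad_root (qcoef H rho y) (2 * (1 - 2 * H)) (8 * H * z) y.

Section Existence.

Variables H rho : R.
Hypothesis hH : 0 < H <= 1 / 2.
Hypothesis hrho : -1 < rho < 1.

Lemma zrhs_cont y z : continuity_2d_pt (zrhs H rho) y z.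
Proof.
  assert (Hq : forall x, continuity_pt (qcoef H rho) x)
    by (intros x; apply continuity_pt_of_ex_derive, qcoef_ex_derive).
  assert (Hsq : forall x, continuity_pt (fun t => t ^ 2) x)
    by (intros x; apply continuity_pt_of_ex_derive; auto_derive; auto).
  unfold zrhs, quad_root, Rdiv; apply continuity_2d_pt_mult.
  - apply continuity_2d_pt_plus.
    + apply continuity_2d_pt_mult; [apply continuity_2d_pt_const | apply continuity_2d_pt_id1].
    + apply (continuity_1d_2d_pt_comp sqrt); [apply continuity_pt_filterlim, continuous_sqrt |].
      apply continuity_2d_pt_plus.
      * apply (continuity_1d_2d_pt_comp (fun t => t ^ 2)); [apply Hsq |].
        apply continuity_2d_pt_mult; [apply continuity_2d_pt_const | apply continuity_2d_pt_id1].
      * apply continuity_2d_pt_mult; [apply continuity_2d_pt_mult |].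
        -- apply continuity_2d_pt_const.
        -- apply (continuity_1d_2d_pt_comp (qcoef H rho) (fun u _ => u));
             [apply Hq | apply continuity_2d_pt_id1].
        -- apply continuity_2d_pt_mult; [apply continuity_2d_pt_const | apply continuity_2d_pt_id2].
  - apply continuity_2d_pt_inv; [| pose proof (qcoef_pos H rho y (proj1 hH) hrho); lra].
    apply continuity_2d_pt_mult; [apply continuity_2d_pt_const |].
    apply (continuity_1d_2d_pt_comp (qcoef H rho) (fun u _ => u)); [apply Hq | apply continuity_2d_pt_id1].
Qed.

Lemma zrhs_mono y z1 z2 : 0 <= y -> z1 <= z2 -> zrhs H rho y z1 <= zrhs H rho y z2.
Proof. intros _ Hz; apply quad_root_le_compat; [apply qcoef_pos; [lra | assumption] | nra]. Qed.

Definition zsub (y : R) : R := H * y ^ 2 / (1 + y ^ 2).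
Definition zsuper (y : R) : R := y ^ 2 / (1 - rho ^ 2).

Lemma zsub_der y : is_derive zsub y (2 * H * y / (1 + y ^ 2) ^ 2).
Proof. unfold zsub; auto_derive; [nra | field; nra]. Qed.

Lemma zsuper_der y : is_derive zsuper y (2 * y / (1 - rho ^ 2)).
Proof. unfold zsuper; auto_derive; [nra | field; nra]. Qed.

Lemma zsub_sub y : 0 <= y -> 2 * H * y / (1 + y ^ 2) ^ 2 <= zrhs H rho y (zsub y).
Proof.
  intros Hy; pose proof (qcoef_pos H rho y (proj1 hH) hrho) as Hq.
  pose proof (qcoef_le H rho y (proj1 hH) hrho) as Hq2.
  apply le_quad_root; [exact Hq | unfold zsub; apply Rmult_le_pos; [lra |]; apply Rdiv_le_0_compat; nra |].
  unfold quad_residual, zsub; set (q := qcoef H rho y) in *.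
  assert (Hy2 : 0 < 1 + y ^ 2) by nra.
  replace (q * (2 * H * y / (1 + y ^ 2) ^ 2) ^ 2 - 2 * (1 - 2 * H) * y * (2 * H * y / (1 + y ^ 2) ^ 2)
    - 8 * H * (H * y ^ 2 / (1 + y ^ 2)))
    with (4 * H ^ 2 * y ^ 2 / (1 + y ^ 2) ^ 4 * (q - 2 * (1 + y ^ 2) ^ 3)
          - 4 * (1 - 2 * H) * H * y ^ 2 / (1 + y ^ 2) ^ 2) by (field; lra).
  assert (0 <= 4 * H ^ 2 * y ^ 2 / (1 + y ^ 2) ^ 4) by (apply Rdiv_le_0_compat; nra).
  assert (0 <= 4 * (1 - 2 * H) * H * y ^ 2 / (1 + y ^ 2) ^ 2) by (apply Rdiv_le_0_compat; nra).
  assert (q <= 2 * (1 + y ^ 2) ^ 3) by nra.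
  nra.
Qed.

Lemma zsuper_super y : 0 <= y -> zrhs H rho y (zsuper y) <= 2 * y / (1 - rho ^ 2).
Proof.
  intros Hy; pose proof (qcoef_ge H rho y (proj1 hH)) as Hq.
  assert (Hr : 0 < 1 - rho ^ 2) by nra.
  assert (HqM : 1 <= qcoef H rho y / (1 - rho ^ 2))
    by (apply (Rmult_le_reg_r (1 - rho ^ 2)); [lra | field_simplify; lra]).
  apply quad_root_le; [nra | unfold zsuper; apply Rmult_le_pos; [lra |]; apply Rdiv_le_0_compat; nra | |].
  - replace (2 * qcoef H rho y * (2 * y / (1 - rho ^ 2))) with (4 * y * (qcoef H rho y / (1 - rho ^ 2)))
      by (field; lra); nra.
  - unfold quad_residual, zsuper.
    replace (qcoef H rho y * (2 * y / (1 - rho ^ 2)) ^ 2 - 2 * (1 - 2 * H) * y * (2 * y / (1 - rho ^ 2))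
      - 8 * H * (y ^ 2 / (1 - rho ^ 2)))
      with (4 * y ^ 2 / (1 - rho ^ 2) * (qcoef H rho y / (1 - rho ^ 2) - 1)) by (field; lra).
    apply Rmult_le_pos; [apply Rdiv_le_0_compat; nra | lra].
Qed.

Lemma zsub_le_zsuper y : 0 <= y -> zsub y <= zsuper y.
Proof.
  intros _; pose proof (pow2_ge_0 y).
  assert (/ (1 + y ^ 2) <= 1) by (rewrite <- Rinv_1; apply Rinv_le_contravar; lra).
  assert (1 <= / (1 - rho ^ 2)) by (rewrite <- Rinv_1; apply Rinv_le_contravar; nra).
  unfold zsub, zsuper, Rdiv.
  apply (Rle_trans _ (H * y ^ 2)); [rewrite <- (Rmult_1_r (H * y ^ 2)) at 2; apply Rmult_le_compat_l; nra |].
  apply (Rle_trans _ (y ^ 2 * 1)); [nra | apply Rmult_le_compat_l; lra].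
Qed.

Lemma zrhs_residual y z : 0 <= z ->
  quad_residual (qcoef H rho y) (2 * (1 - 2 * H)) (8 * H * z) y (zrhs H rho y z) = 0.
Proof. intros Hz; apply quad_residual_root; [apply qcoef_pos; lra | nra]. Qed.

Lemma sqrt_zsuper_bigO (z : R -> R) : (forall y, 0 <= y -> z y <= zsuper y) ->
  bigO_right (fun y => sqrt (z y)) 1.
Proof.
  intros Hz; exists (/ (1 - rho ^ 2)); refine (filter_imp _ _ _ at_right_pos); intros y Hy.
  assert (Hr : 0 < 1 - rho ^ 2 <= 1) by nra.
  assert (Hzy : z y <= (/ (1 - rho ^ 2) * y) ^ 2).
  { apply (Rle_trans _ _ _ (Hz y ltac:(lra))); unfold zsuper.
    replace ((/ (1 - rho ^ 2) * y) ^ 2) with (y ^ 2 / (1 - rho ^ 2) * / (1 - rho ^ 2)) by (field; lra).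
    rewrite <- (Rmult_1_r (y ^ 2 / (1 - rho ^ 2))) at 1; apply Rmult_le_compat_l;
      [apply Rdiv_le_0_compat; nra | rewrite <- Rinv_1; apply Rinv_le_contravar; lra]. }
  rewrite pow_1, Rabs_right by apply Rle_ge, sqrt_pos.
  rewrite <- (sqrt_pow2 (/ (1 - rho ^ 2) * y)); [apply sqrt_le_1_alt, Hzy |].
  apply Rmult_le_pos; [left; apply Rinv_0_lt_compat |]; lra.
Qed.

Lemma sqrt_half_solution (z : R -> R) : z 0 = 0 ->
  (forall y, 0 <= y -> zsub y <= z y <= zsuper y) ->
  (forall y, 0 < y -> is_derive z y (zrhs H rho y (z y))) ->
  half_solution H rho (fun y => sqrt (z y)).
Proof.
  intros Hz0 Hbounds Hder.
  split; [rewrite Hz0; apply sqrt_0 |]; split.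
  - apply (bigO_right_filterlim _ 0), sqrt_zsuper_bigO; intros y Hy; apply Hbounds, Hy.
  - intros y Hy.
    assert (Hz : 0 < z y).
    { eapply Rlt_le_trans; [| apply (Hbounds y ltac:(lra))]; unfold zsub.
      apply Rdiv_lt_0_compat; [apply Rmult_lt_0_compat |]; nra. }
    assert (Hd : is_derive (fun t : R => sqrt (z t)) y (zrhs H rho y (z y) / (2 * sqrt (z y))))
      by (apply (is_derive_sqrt z y); [apply Hder | ]; assumption).
    assert (Hs : 0 < sqrt (z y)) by (apply sqrt_lt_R0, Hz).
    assert (HF : 0 < zrhs H rho y (z y))
      by (apply quad_root_pos; [apply qcoef_pos | apply Rmult_lt_0_compat]; lra).
    rewrite (is_derive_unique _ _ _ Hd).
    split; [exact Hs |]; split; [eexists; exact Hd |]; split; [apply Rdiv_lt_0_compat; lra |].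
    pose proof (zrhs_residual y (z y) ltac:(lra)) as Hres; unfold residual, quad_residual in *.
    set (F := zrhs H rho y (z y)) in *; set (h := sqrt (z y)) in *.
    assert (Hh2 : z y = h * h) by (symmetry; apply sqrt_sqrt; lra).
    rewrite Hh2 in Hres.
    replace (qcoef H rho y * (F / (2 * h)) ^ 2 - (1 - 2 * H) * (y / h) * (F / (2 * h)) - 2 * H)
      with ((qcoef H rho y * F ^ 2 - 2 * (1 - 2 * H) * y * F - 8 * H * (h * h)) / (4 * h * h))
      by (field; lra).
    rewrite Hres; field; lra.
Qed.

Theorem half_solution_exists : exists h, half_solution H rho h.
Proof.
  destruct (monotone_iteration_solution (zrhs H rho) zsub zsuper _ _ zrhs_cont zrhs_mono
    zsub_der zsuper_der zsub_sub zsuper_super) as (z & Hz0 & Hbounds & Hder);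
    [unfold zsub; simpl; lra | unfold zsuper; simpl; lra | exact zsub_le_zsuper |].
  exists (fun y => sqrt (z y)); apply sqrt_half_solution; assumption.
Qed.

End Existence.

Lemma ode_at_iff H rho g y :
  ode_at H rho g y <-> g y <> 0 /\ residual H rho y (g y) (Derive g y) = 0.
Proof.
  unfold ode_at, residual, quad_residual, qcoef.
  split; intros [Hg E]; split; try exact Hg;
    assert (Hk : y * Derive g y / g y = y / g y * Derive g y) by (field; exact Hg); lra.
Qed.

Lemma half_solution_le H rho h1 h2 : 0 < H <= 1 / 2 -> -1 < rho < 1 ->
  half_solution H rho h1 -> half_solution H rho h2 -> forall y, 0 <= y -> h1 y <= h2 y.
Proof.
  intros hH hrho (H10 & Hlim1 & Hd1) (H20 & Hlim2 & Hd2) y Hy.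
  apply (quad_ode_comparison (qcoef H rho) (2 * H) (1 - 2 * H) h1 h2 y); try lra; try assumption;
    [intros t; apply qcoef_pos; lra | intros t Ht].
  destruct (Hd1 t ltac:(lra)) as (P1 & D1 & _ & R1); destruct (Hd2 t ltac:(lra)) as (P2 & D2 & Q2 & R2).
  unfold residual in R1, R2; repeat split; try assumption; lra.
Qed.

Lemma half_solution_unique H rho h1 h2 : 0 < H <= 1 / 2 -> -1 < rho < 1 ->
  half_solution H rho h1 -> half_solution H rho h2 -> forall y, 0 <= y -> h1 y = h2 y.
Proof. intros; apply Rle_antisym; apply (half_solution_le H rho); assumption. Qed.

Definition beta (H rho : R) : R := -2 * rho / ((2 * H + 1) * (2 * H + 3)).

Lemma beta_opp H rho : 0 < H -> beta H (- rho) = - beta H rho.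
Proof. intros; unfold beta; field; lra. Qed.

(* The first-order terms of a half solution cancel exactly when its second Taylor coefficient
   is [beta]. *)
Lemma beta_cancels H rho : 0 < H -> 2 * rho / (2 * H + 1) + (3 + 2 * H) * beta H rho = 0.
Proof. intros; unfold beta; field; lra. Qed.

Definition cubic_rest (y m a a' : R) : R :=
  m * a + 2 * a' * (m + a) + a' ^ 2 + y * (2 * m * a * a' + (m + a) * a' ^ 2) + y ^ 2 * m * a * a' ^ 2.

Lemma cubic_expand y m a a' :
  (1 + y * m) * (1 + y * a) * (1 + y * a') ^ 2 = 1 + y * (m + a + 2 * a') + y ^ 2 * cubic_rest y m a a'.
Proof. unfold cubic_rest; ring. Qed.

Section Barriers.

Variables H rho : R.
Hypothesis hH : 0 < H <= 1 / 2.
Hypothesis hrho : -1 < rho < 1.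

Let b := beta H rho.

Definition barrier_slope (K y : R) : R := 1 + b * y + K * y ^ 2.
Definition barrier_der (K y : R) : R := 1 + 2 * b * y + 3 * K * y ^ 2.

Definition barrier_gap (K y : R) : R :=
  / (2 * H + 1) ^ 2 + (4 + 4 * H) * K +
  cubic_rest y (2 * rho / (2 * H + 1) + y / (2 * H + 1) ^ 2) (b + K * y) (2 * b + 3 * K * y).

Lemma barrier_is_derive K y : is_derive (fun t => t * barrier_slope K t) y (barrier_der K y).
Proof. unfold barrier_slope, barrier_der; auto_derive; [auto | ring]. Qed.

Lemma barrier_Derive K y : Derive (fun t => t * barrier_slope K t) y = barrier_der K y.
Proof. apply is_derive_unique, barrier_is_derive. Qed.

Lemma barrier_gap_eq K y :
  qcoef H rho y * barrier_slope K y * barrier_der K y ^ 2 - (1 - 2 * H) * barrier_der K y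
    - 2 * H * barrier_slope K y = y ^ 2 * barrier_gap K y.
Proof.
  assert (Hq : qcoef H rho y = 1 + y * (2 * rho / (2 * H + 1) + y / (2 * H + 1) ^ 2))
    by (unfold qcoef; field; lra).
  replace (barrier_slope K y) with (1 + y * (b + K * y)) by (unfold barrier_slope; ring).
  replace (barrier_der K y) with (1 + y * (2 * b + 3 * K * y)) by (unfold barrier_der; ring).
  rewrite Hq, cubic_expand; unfold barrier_gap.
  pose proof (beta_cancels H rho (proj1 hH)) as Hc; fold b in Hc.
  replace (2 * rho / (2 * H + 1)) with (- (3 + 2 * H) * b) by lra.
  field; lra.
Qed.

Lemma barrier_residual K y : 0 < y -> 0 < barrier_slope K y ->
  residual H rho y (y * barrier_slope K y) (barrier_der K y)
  = y ^ 2 * barrier_gap K y / barrier_slope K y.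
Proof.
  intros Hy Hs; rewrite <- barrier_gap_eq.
  unfold residual, quad_residual; field; lra.
Qed.

Lemma barrier_filterlim K : filterlim (fun y => y * barrier_slope K y) (at_right 0) (locally 0).
Proof.
  apply (bigO_right_filterlim _ 0), (bigO_right_ext (fun y => y ^ 1 * barrier_slope K y));
    [apply filter_forall; intros y; rewrite pow_1; reflexivity |].
  apply (bigO_right_mult _ _ 1 0); [apply bigO_right_pow |].
  apply bigO_right_continuous, continuous_of_ex_derive; unfold barrier_slope; auto_derive; auto.
Qed.

(* Chosen so that [barrier_gap barrier_K 0 >= 1] and [barrier_gap (- barrier_K) 0 <= -1]. *)
Definition barrier_K : R := (Rabs (barrier_gap 0 0) + 1) / (4 + 4 * H).

Lemma barriers_near_0 : at_right 0 (fun y =>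
  (0 < barrier_slope (- barrier_K) y /\ 0 < barrier_slope barrier_K y /\ 0 < barrier_der barrier_K y) /\
  barrier_gap (- barrier_K) y < 0 /\ 0 < barrier_gap barrier_K y).
Proof.
  assert (Hgap : forall K, barrier_gap K 0 = barrier_gap 0 0 + (4 + 4 * H) * K)
    by (intros K; unfold barrier_gap, cubic_rest; ring).
  assert (HK : (4 + 4 * H) * barrier_K = Rabs (barrier_gap 0 0) + 1) by (unfold barrier_K; field; lra).
  pose proof (Rle_abs (barrier_gap 0 0)); pose proof (Rle_abs (- barrier_gap 0 0)); rewrite Rabs_Ropp in *.
  assert (Hs : forall K, continuous (barrier_slope K) 0)
    by (intros K; apply continuous_of_ex_derive; unfold barrier_slope; auto_derive; auto).
  assert (Hg : forall K, continuous (barrier_gap K) 0)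
    by (intros K; apply continuous_of_ex_derive; unfold barrier_gap, cubic_rest; auto_derive; lra).
  repeat apply filter_and.
  - apply at_right_gt_of_continuous; [apply Hs | unfold barrier_slope; lra].
  - apply at_right_gt_of_continuous; [apply Hs | unfold barrier_slope; lra].
  - apply at_right_gt_of_continuous; [| unfold barrier_der; lra].
    apply continuous_of_ex_derive; unfold barrier_der; auto_derive; auto.
  - apply at_right_lt_of_continuous; [apply Hg | rewrite Hgap; lra].
  - apply at_right_gt_of_continuous; [apply Hg | rewrite Hgap; lra].
Qed.

Lemma half_solution_sandwich h : half_solution H rho h ->
  at_right 0 (fun y => y * barrier_slope (- barrier_K) y <= h y <= y * barrier_slope barrier_K y).
Proof.
  intros Hh; pose proof Hh as (H0 & Hlim & Hd).
  destruct (at_right_interval _ barriers_near_0) as (Y & HY & Hbar).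
  assert (Hres : forall K t, 0 < t <= Y -> 0 < barrier_slope K t ->
    quad_residual (qcoef H rho t) (1 - 2 * H) (2 * H) (t / (t * barrier_slope K t))
      (Derive (fun x => x * barrier_slope K x) t) = t ^ 2 / barrier_slope K t * barrier_gap K t).
  { intros K t Ht Hs; rewrite barrier_Derive.
    fold (residual H rho t (t * barrier_slope K t) (barrier_der K t)).
    rewrite barrier_residual by lra; field; lra. }
  assert (Hsq : forall K t, 0 < t -> 0 < barrier_slope K t -> 0 < t ^ 2 / barrier_slope K t)
    by (intros K t Ht Hs; apply Rdiv_lt_0_compat; [apply pow_lt |]; lra).
  assert (Hlow : forall y, 0 <= y <= Y -> y * barrier_slope (- barrier_K) y <= h y).
  { apply (quad_ode_comparison (qcoef H rho) (2 * H) (1 - 2 * H) _ h Y);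
      [lra | lra | intros t; apply qcoef_pos; lra | ring | exact H0 | apply barrier_filterlim | exact Hlim |].
    intros t Ht; destruct (Hbar t Ht) as ((S1 & S2 & S3) & G1 & G2).
    destruct (Hd t ltac:(lra)) as (P & D & Q & R); unfold residual in R.
    rewrite Hres by lra; pose proof (Hsq (- barrier_K) t ltac:(lra) S1).
    repeat split; try assumption; [apply Rmult_lt_0_compat; lra | eexists; apply barrier_is_derive | nra | lra]. }
  assert (Hup : forall y, 0 <= y <= Y -> h y <= y * barrier_slope barrier_K y).
  { apply (quad_ode_comparison (qcoef H rho) (2 * H) (1 - 2 * H) h _ Y);
      [lra | lra | intros t; apply qcoef_pos; lra | exact H0 | ring | exact Hlim | apply barrier_filterlim |].
    intros t Ht; destruct (Hbar t Ht) as ((S1 & S2 & S3) & G1 & G2).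
    destruct (Hd t ltac:(lra)) as (P & D & Q & R); unfold residual in R.
    rewrite barrier_Derive at 1.
    rewrite Hres by lra; pose proof (Hsq barrier_K t ltac:(lra) S2).
    repeat split; try assumption; [apply Rmult_lt_0_compat; lra | eexists; apply barrier_is_derive | lra | nra]. }
  refine (filter_imp _ _ _ (filter_and _ _ (at_right_lt Y HY) at_right_pos)).
  intros y [Hy Hy0]; split; [apply Hlow | apply Hup]; lra.
Qed.

End Barriers.

Definition qcoef_der (H rho y : R) : R := 2 * rho / (2 * H + 1) + 2 * y / (2 * H + 1) ^ 2.

Lemma qcoef_is_derive H rho y : 0 < H -> is_derive (qcoef H rho) y (qcoef_der H rho y).
Proof. intros; unfold qcoef, qcoef_der; auto_derive; [lra | field; lra]. Qed.

Section HalfSolution.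

Variables H rho : R.
Hypothesis hH : 0 < H <= 1 / 2.
Hypothesis hrho : -1 < rho < 1.
Variable h : R -> R.
Hypothesis hh : half_solution H rho h.

Lemma half_pos y : 0 < y -> 0 < h y.
Proof. intros; apply hh; assumption. Qed.

Lemma half_ex_derive y : 0 < y -> ex_derive h y.
Proof. intros; apply hh; assumption. Qed.

Lemma half_Derive_pos y : 0 < y -> 0 < Derive h y.
Proof. intros; apply hh; assumption. Qed.

Lemma half_residual y : 0 < y -> residual H rho y (h y) (Derive h y) = 0.
Proof. intros; apply hh; assumption. Qed.

Lemma half_Derive_root y : 0 < y -> Derive h y = quad_root (qcoef H rho y) (1 - 2 * H) (2 * H) (y / h y).
Proof.
  intros Hy; apply quad_root_unique; [apply qcoef_pos; lra | lra | apply half_Derive_pos, Hy |].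
  apply half_residual, Hy.
Qed.

Lemma half_Derive_ex_derive y : 0 < y -> ex_derive (Derive h) y.
Proof.
  intros Hy; apply (ex_derive_ext_loc (fun u => quad_root (qcoef H rho u) (1 - 2 * H) (2 * H) (u / h u))).
  - apply (filter_imp (fun u => 0 < u)); [intros u Hu; symmetry; apply half_Derive_root, Hu | apply locally_pos, Hy].
  - pose proof (half_ex_derive y Hy); pose proof (half_pos y Hy); pose proof (qcoef_pos H rho y (proj1 hH) hrho).
    pose proof (qcoef_ex_derive H rho y).
    assert (0 < ((1 - 2 * H) * (y / h y)) ^ 2 + 4 * qcoef H rho y * (2 * H))
      by (pose proof (pow2_ge_0 ((1 - 2 * H) * (y / h y))); nra).
    unfold quad_root; auto_derive; repeat split; try assumption; lra.
Qed.

(* Obtained by differentiating [residual y (h y) (h' y) = 0]. *)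
Lemma half_Derive2_eq y : 0 < y ->
  Derive (Derive h) y * (2 * qcoef H rho y * Derive h y - (1 - 2 * H) * (y / h y))
  = (1 - 2 * H) * ((h y - y * Derive h y) / h y ^ 2) * Derive h y - qcoef_der H rho y * Derive h y ^ 2.
Proof.
  intros Hy; pose proof (half_pos y Hy); pose proof (half_ex_derive y Hy); pose proof (half_Derive_ex_derive y Hy).
  set (G u := residual H rho u (h u) (Derive h u)).
  assert (HG0 : is_derive G y 0).
  { apply (is_derive_ext_loc (fun _ => 0)); [| apply (is_derive_const (K := R_AbsRing) (V := R_NormedModule))].
    apply (filter_imp (fun u => 0 < u)); [intros u Hu; symmetry; apply half_residual, Hu | apply locally_pos, Hy]. }
  assert (HG : is_derive G y (qcoef_der H rho y * Derive h y ^ 2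
      + qcoef H rho y * (2 * Derive h y * Derive (Derive h) y)
      - (1 - 2 * H) * ((h y - y * Derive h y) / h y ^ 2 * Derive h y + y / h y * Derive (Derive h) y))).
  { unfold G, residual, quad_residual.
    apply (is_derive_ext
      (fun u => qcoef H rho u * Derive h u ^ 2 - (1 - 2 * H) * (u / h u) * Derive h u - 2 * H));
      [reflexivity |].
    auto_derive; [repeat split; try assumption; try lra; exists (qcoef_der H rho y); apply qcoef_is_derive; lra |].
    change (fun x => qcoef H rho x) with (qcoef H rho); change (fun x => h x) with h;
      change (fun x => Derive h x) with (Derive h).
    rewrite (is_derive_unique _ _ _ (qcoef_is_derive H rho y (proj1 hH))); field; lra. }
  pose proof (is_derive_unique _ _ _ HG) as E1; rewrite (is_derive_unique _ _ _ HG0) in E1.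
  lra.
Qed.

Lemma half_Derive2_denom y : 0 < y ->
  (2 * qcoef H rho y * Derive h y - (1 - 2 * H) * (y / h y)) * Derive h y
  = qcoef H rho y * Derive h y ^ 2 + 2 * H.
Proof. intros Hy; pose proof (half_residual y Hy) as R; unfold residual, quad_residual in R; nra. Qed.

Lemma half_Derive2_denom_pos y : 0 < y ->
  0 < 2 * qcoef H rho y * Derive h y - (1 - 2 * H) * (y / h y).
Proof.
  intros Hy; pose proof (half_Derive2_denom y Hy); pose proof (half_Derive_pos y Hy).
  pose proof (qcoef_pos H rho y (proj1 hH) hrho); pose proof (pow2_ge_0 (Derive h y)).
  destruct (Rlt_le_dec 0 (2 * qcoef H rho y * Derive h y - (1 - 2 * H) * (y / h y))) as [| Hn];
    [assumption | nra].
Qed.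

Lemma half_Derive2_cont y : 0 < y -> continuous (Derive (Derive h)) y.
Proof.
  intros Hy.
  set (E u := ((1 - 2 * H) * ((h u - u * Derive h u) / h u ^ 2) * Derive h u
                - qcoef_der H rho u * Derive h u ^ 2)
              / (2 * qcoef H rho u * Derive h u - (1 - 2 * H) * (u / h u))).
  apply (continuous_ext_loc _ E).
  - apply (filter_imp (fun u => 0 < u)); [| apply locally_pos, Hy].
    intros u Hu; pose proof (half_Derive2_denom_pos u Hu).
    unfold E; rewrite <- (half_Derive2_eq u Hu); unfold Rdiv; rewrite Rmult_assoc, Rinv_r, Rmult_1_r by lra.
    reflexivity.
  - pose proof (half_pos y Hy); pose proof (half_ex_derive y Hy); pose proof (half_Derive_ex_derive y Hy).
    pose proof (half_Derive2_denom_pos y Hy) as Hden.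
    apply continuous_of_ex_derive; unfold E, qcoef_der.
    assert (ex_derive (qcoef H rho) y) by apply qcoef_ex_derive.
    unfold Rdiv in Hden; auto_derive; repeat split; try assumption; try lra; nra.
Qed.

Lemma half_bigO : bigO_right (fun y => h y - (y + beta H rho * y ^ 2)) 3.
Proof.
  exists (barrier_K H rho).
  refine (filter_imp _ _ _ (filter_and _ _ (half_solution_sandwich H rho hH hrho h hh) at_right_pos)).
  intros y [[Hl Hu] Hy]; unfold barrier_slope in Hl, Hu; apply Rabs_le; split; nra.
Qed.

Lemma half_slope_bigO : bigO_right (fun y => h y / y - barrier_slope H rho 0 y) 2.
Proof.
  apply (bigO_right_ext (fun y => (h y - (y + beta H rho * y ^ 2)) / y));
    [| apply bigO_right_div_id, half_bigO].
  refine (filter_imp _ _ _ at_right_pos); intros y Hy; unfold barrier_slope; field; lra.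
Qed.

Lemma half_quadratic y : 0 < y ->
  qcoef H rho y * (h y / y) * Derive h y ^ 2 - (1 - 2 * H) * Derive h y - 2 * H * (h y / y) = 0.
Proof.
  intros Hy; pose proof (half_residual y Hy) as R; pose proof (half_pos y Hy).
  unfold residual, quad_residual in R.
  replace (qcoef H rho y * (h y / y) * Derive h y ^ 2 - (1 - 2 * H) * Derive h y - 2 * H * (h y / y))
    with (h y / y * (qcoef H rho y * Derive h y ^ 2 - (1 - 2 * H) * (y / h y) * Derive h y - 2 * H))
    by (field; lra).
  rewrite R; ring.
Qed.

Lemma half_quadratic_factor_lower : at_right 0 (fun y =>
  H <= qcoef H rho y * (h y / y) * (barrier_der H rho 0 y + Derive h y) - (1 - 2 * H)).
Proof.
  set (x := barrier_der H rho 0); set (s0 := barrier_slope H rho 0); set (t y := h y / y - s0 y).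
  assert (Hc : at_right 0 (fun y => 3 * H / 2 < qcoef H rho y * s0 y * x y - (1 - 2 * H))).
  { apply at_right_gt_of_continuous;
      [apply continuous_of_ex_derive; unfold s0, x, barrier_slope, barrier_der, qcoef; auto_derive; lra |].
    unfold s0, x, barrier_slope, barrier_der, qcoef; simpl; lra. }
  assert (Hsmall : at_right 0 (fun y => Rabs (t y * (qcoef H rho y * x y)) < H / 2)).
  { apply (bigO_right_small _ 1); [| lra]; apply (bigO_right_mult _ _ 2 0); [apply half_slope_bigO |].
    apply bigO_right_continuous, continuous_of_ex_derive; unfold x, barrier_der, qcoef; auto_derive; lra. }
  refine (filter_imp _ _ _ (filter_and _ _ (filter_and _ _ Hc Hsmall) at_right_pos)).
  intros y [[H1 H2] Hy]; apply Rabs_def2 in H2.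
  assert (0 < qcoef H rho y * (h y / y) * Derive h y).
  { apply Rmult_lt_0_compat; [apply Rmult_lt_0_compat; [apply qcoef_pos; lra |] | apply half_Derive_pos, Hy].
    apply Rdiv_lt_0_compat; [apply half_pos |]; lra. }
  replace (qcoef H rho y * (h y / y) * (x y + Derive h y) - (1 - 2 * H))
    with ((qcoef H rho y * s0 y * x y - (1 - 2 * H)) + t y * (qcoef H rho y * x y)
          + qcoef H rho y * (h y / y) * Derive h y) by (unfold t; ring).
  lra.
Qed.

(* With [s = h y / y], [p = h' y] and [x = 1 + 2 beta y], [half_quadratic] says [Psi p = 0] for
   [Psi w = q s w^2 - (1 - 2H) w - 2H s]. By [barrier_gap_eq] at [K = 0], [Psi x = O(y^2)], and
   [Psi x - Psi p = (x - p) (q s (x + p) - (1 - 2H))]. *)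
Lemma half_Derive_bigO : bigO_right (fun y => Derive h y - barrier_der H rho 0 y) 2.
Proof.
  set (x := barrier_der H rho 0); set (s0 := barrier_slope H rho 0); set (t y := h y / y - s0 y).
  set (num y := y ^ 2 * barrier_gap H rho 0 y + t y * (qcoef H rho y * x y ^ 2 - 2 * H)).
  set (den y := qcoef H rho y * (h y / y) * (x y + Derive h y) - (1 - 2 * H)).
  assert (Hnum : bigO_right num 2).
  { apply bigO_right_plus; apply (bigO_right_mult _ _ 2 0); try apply bigO_right_pow; try apply half_slope_bigO;
      apply bigO_right_continuous, continuous_of_ex_derive;
      unfold barrier_gap, cubic_rest, x, barrier_der, qcoef; auto_derive; lra. }
  apply (bigO_right_ext (fun y => - (num y / den y)));
    [| apply bigO_right_opp, (bigO_right_div _ _ 2 H); [exact Hnum | lra | exact half_quadratic_factor_lower]].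
  refine (filter_imp _ _ _ (filter_and _ _ half_quadratic_factor_lower at_right_pos)); intros y [Hd Hy].
  fold x in Hd; fold (den y) in Hd.
  pose proof (half_quadratic y Hy) as Hp.
  pose proof (barrier_gap_eq H rho hH hrho 0 y) as Hgap; fold (s0 y) (x y) in Hgap.
  assert (Hfac : num y = (x y - Derive h y) * den y).
  { unfold num, den; rewrite <- Hgap; replace (t y) with (h y / y - s0 y) by reflexivity.
    rewrite <- Rminus_0_r at 1; rewrite <- Hp at 1; ring. }
  rewrite Hfac; field; lra.
Qed.

Lemma half_u_bigO : bigO_right (fun y => h y / y - 1) 1.
Proof.
  apply (bigO_right_ext (fun y => (h y / y - barrier_slope H rho 0 y) + beta H rho * y));
    [apply filter_forall; intros y; unfold barrier_slope; ring |].
  apply bigO_right_plus; [apply (bigO_right_S _ 1), half_slope_bigO | apply bigO_right_scal_id].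
Qed.

Lemma half_v_bigO : bigO_right (fun y => Derive h y - 1) 1.
Proof.
  apply (bigO_right_ext (fun y => (Derive h y - barrier_der H rho 0 y) + 2 * beta H rho * y));
    [apply filter_forall; intros y; unfold barrier_der; ring |].
  apply bigO_right_plus; [apply (bigO_right_S _ 1), half_Derive_bigO | apply bigO_right_scal_id].
Qed.

Lemma half_w_bigO : bigO_right (fun y => (h y / y - Derive h y) / y + beta H rho) 1.
Proof.
  apply (bigO_right_ext
    (fun y => ((h y / y - barrier_slope H rho 0 y) - (Derive h y - barrier_der H rho 0 y)) / y)).
  - refine (filter_imp _ _ _ at_right_pos); intros y Hy; unfold barrier_slope, barrier_der; field; lra.
  - apply bigO_right_div_id, bigO_right_minus; [apply half_slope_bigO | apply half_Derive_bigO].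
Qed.

Lemma half_Derive2_weight_lower : at_right 0 (fun y =>
  H / 4 <= 2 * qcoef H rho y * Derive h y * (h y / y) ^ 2 - (1 - 2 * H) * (h y / y)).
Proof.
  assert (Hsu : at_right 0 (fun y => Rabs (h y / y - 1) < 1 / 2))
    by (apply (bigO_right_small _ 0 half_u_bigO); lra).
  assert (Hsv : at_right 0 (fun y => Rabs (Derive h y - 1) < 1))
    by (apply (bigO_right_small _ 0 half_v_bigO); lra).
  refine (filter_imp _ _ _ (filter_and _ _ at_right_pos (filter_and _ _ Hsu Hsv))); clear Hsu Hsv.
  intros y (Hy & Hsu & Hsv); apply Rabs_def2 in Hsu; apply Rabs_def2 in Hsv.
  pose proof (half_Derive2_denom y Hy); pose proof (half_Derive2_denom_pos y Hy).
  pose proof (half_Derive_pos y Hy); pose proof (half_pos y Hy); pose proof (pow2_ge_0 (Derive h y)).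
  pose proof (qcoef_pos H rho y (proj1 hH) hrho).
  replace (2 * qcoef H rho y * Derive h y * (h y / y) ^ 2 - (1 - 2 * H) * (h y / y))
    with ((h y / y) ^ 2 * (2 * qcoef H rho y * Derive h y - (1 - 2 * H) * (y / h y))) by (field; lra).
  set (X := 2 * qcoef H rho y * Derive h y - (1 - 2 * H) * (y / h y)) in *.
  assert (0 < X * (2 - Derive h y)) by (apply Rmult_lt_0_compat; lra).
  assert (0 <= ((h y / y) ^ 2 - 1 / 4) * X) by (apply Rmult_le_pos; nra).
  nra.
Qed.

(* The numerator of [h'' - 2 beta] in terms of the small quantities [u = h/y - 1], [v = h' - 1],
   [w = (h/y - h')/y + beta] and [y], one term per small factor; the constant term vanishes by
   [beta_cancels]. *)
Lemma second_order_split y u v w :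
  (1 - 2 * H) * (w - beta H rho) * (1 + v)
  - qcoef_der H rho y * (1 + v) ^ 2 * (1 + u) ^ 2
  - 2 * beta H rho * (2 * qcoef H rho y * (1 + v) * (1 + u) ^ 2 - (1 - 2 * H) * (1 + u))
  = w * ((1 - 2 * H) * (1 + v))
    + v * (- (1 - 2 * H) * beta H rho - qcoef_der H rho y * (1 + u) * (1 + u) * (2 + v)
           - 4 * beta H rho * qcoef H rho y * (1 + u) * (1 + u))
    + u * (- qcoef_der H rho y * (2 + u) - 2 * beta H rho * (2 * qcoef H rho y * (2 + u) - (1 - 2 * H)))
    + y * (- 2 / (2 * H + 1) ^ 2 - 4 * beta H rho * (2 * rho / (2 * H + 1) + / (2 * H + 1) ^ 2 * y)).
Proof.
  pose proof (beta_cancels H rho (proj1 hH)) as Hc.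
  unfold qcoef, qcoef_der.
  replace (2 * rho * (y / (2 * H + 1))) with (y * (2 * rho / (2 * H + 1))) by (field; lra).
  replace (2 * rho / (2 * H + 1)) with (- (3 + 2 * H) * beta H rho) by lra.
  field; lra.
Qed.

Lemma half_Derive2_identity y : 0 < y ->
  (Derive (Derive h) y - 2 * beta H rho)
    * (2 * qcoef H rho y * Derive h y * (h y / y) ^ 2 - (1 - 2 * H) * (h y / y))
  = (1 - 2 * H) * ((h y / y - Derive h y) / y) * Derive h y
    - qcoef_der H rho y * Derive h y ^ 2 * (h y / y) ^ 2
    - 2 * beta H rho * (2 * qcoef H rho y * Derive h y * (h y / y) ^ 2 - (1 - 2 * H) * (h y / y)).
Proof.
  intros Hy; pose proof (half_Derive2_eq y Hy) as E2; pose proof (half_pos y Hy).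
  replace (2 * qcoef H rho y * Derive h y * (h y / y) ^ 2 - (1 - 2 * H) * (h y / y))
    with ((2 * qcoef H rho y * Derive h y - (1 - 2 * H) * (y / h y)) * (h y / y) ^ 2) by (field; lra).
  replace ((1 - 2 * H) * ((h y / y - Derive h y) / y) * Derive h y
           - qcoef_der H rho y * Derive h y ^ 2 * (h y / y) ^ 2)
    with (((1 - 2 * H) * ((h y - y * Derive h y) / h y ^ 2) * Derive h y
           - qcoef_der H rho y * Derive h y ^ 2) * (h y / y) ^ 2) by (field; lra).
  rewrite <- E2; ring.
Qed.

Lemma half_Derive2_bigO : bigO_right (fun y => Derive (Derive h) y - 2 * beta H rho) 1.
Proof.
  set (u y := h y / y - 1); set (v y := Derive h y - 1); set (w y := (h y / y - Derive h y) / y + beta H rho).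
  set (D y := 2 * qcoef H rho y * Derive h y * (h y / y) ^ 2 - (1 - 2 * H) * (h y / y)).
  set (num y := w y * ((1 - 2 * H) * (1 + v y))
    + v y * (- (1 - 2 * H) * beta H rho - qcoef_der H rho y * (1 + u y) * (1 + u y) * (2 + v y)
             - 4 * beta H rho * qcoef H rho y * (1 + u y) * (1 + u y))
    + u y * (- qcoef_der H rho y * (2 + u y) - 2 * beta H rho * (2 * qcoef H rho y * (2 + u y) - (1 - 2 * H)))
    + y * (- 2 / (2 * H + 1) ^ 2 - 4 * beta H rho * (2 * rho / (2 * H + 1) + / (2 * H + 1) ^ 2 * y))).
  assert (Hu : bigO_right u 1) by apply half_u_bigO.
  assert (Hv : bigO_right v 1) by apply half_v_bigO.
  assert (Hw : bigO_right w 1) by apply half_w_bigO.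
  assert (Hu0 : bigO_right u 0) by (apply bigO_right_S, Hu).
  assert (Hv0 : bigO_right v 0) by (apply bigO_right_S, Hv).
  assert (Hid : bigO_right (fun y => y) 1) by apply bigO_right_id.
  assert (Hq : continuous (qcoef H rho) 0) by apply continuous_of_ex_derive, qcoef_ex_derive.
  assert (Hq' : continuous (qcoef_der H rho) 0)
    by (apply continuous_of_ex_derive; unfold qcoef_der; auto_derive; lra).
  assert (Hnum : bigO_right num 1)
    by (repeat apply bigO_right_plus; apply (bigO_right_mult _ _ 1 0); try assumption; bigO_right_bounded).
  apply (bigO_right_ext (fun y => num y / D y));
    [| apply (bigO_right_div _ _ 1 (H / 4)); [exact Hnum | lra | exact half_Derive2_weight_lower]].
  refine (filter_imp _ _ _ (filter_and _ _ half_Derive2_weight_lower at_right_pos)); intros y [HD Hy].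
  fold (D y) in HD.
  assert (HN : num y = (Derive (Derive h) y - 2 * beta H rho) * D y).
  { unfold num; rewrite <- second_order_split.
    replace (1 + u y) with (h y / y) by (unfold u; ring).
    replace (1 + v y) with (Derive h y) by (unfold v; ring).
    replace (w y - beta H rho) with ((h y / y - Derive h y) / y) by (unfold w; ring).
    unfold D; rewrite half_Derive2_identity by exact Hy; ring. }
  rewrite HN; field; lra.
Qed.

End HalfSolution.

Lemma bigO_at0_of_right (f p : R -> R) k : f 0 = p 0 ->
  bigO_right (fun y => f y - p y) k -> bigO_right (fun y => f (- y) - p (- y)) k -> bigO_at0 f p k.
Proof.
  intros H0 [C1 H1] [C2 H2].
  destruct (at_right_interval _ H1) as (Y1 & HY1 & B1); destruct (at_right_interval _ H2) as (Y2 & HY2 & B2).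
  exists (Rabs C1 + Rabs C2), (Rmin Y1 Y2); split; [apply Rmin_glb_lt; assumption |].
  intros y Hy; pose proof (Rmin_l Y1 Y2); pose proof (Rmin_r Y1 Y2).
  pose proof (Rabs_pos C1); pose proof (Rabs_pos C2); pose proof (pow_le (Rabs y) k (Rabs_pos y)).
  destruct (Rtotal_order y 0) as [Hn | [-> | Hp]].
  - specialize (B2 (- y) ltac:(apply Rabs_def2 in Hy; lra)); rewrite Ropp_involutive in B2.
    rewrite (Rabs_left y Hn); eapply Rle_trans; [exact B2 |].
    pose proof (Rle_abs C2); apply Rmult_le_compat_r; [apply pow_le; lra | lra].
  - rewrite H0, Rminus_diag, Rabs_R0; apply Rmult_le_pos; [lra | apply pow_le; lra].
  - specialize (B1 y ltac:(apply Rabs_def2 in Hy; lra)).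
    rewrite (Rabs_right y) by lra; eapply Rle_trans; [exact B1 |].
    pose proof (Rle_abs C1); apply Rmult_le_compat_r; [apply pow_le; lra | lra].
Qed.

Lemma is_derive_of_bigO_at0 (f : R -> R) L : bigO_at0 f (fun y => f 0 + L * y) 2 -> is_derive f 0 L.
Proof.
  intros (C & d & Hd & Hb); apply is_derive_Reals; intros eps He.
  assert (HC : 0 < eps / (Rabs C + 1)) by (apply Rdiv_lt_0_compat; [| pose proof (Rabs_pos C)]; lra).
  exists (mkposreal _ (Rmin_glb_lt _ _ _ Hd HC)); intros h Hh0 Hh; simpl in Hh.
  pose proof (Rmin_l d (eps / (Rabs C + 1))); pose proof (Rmin_r d (eps / (Rabs C + 1))).
  rewrite Rplus_0_l in *; specialize (Hb h ltac:(lra)).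
  assert (Hah : 0 < Rabs h) by (apply Rabs_pos_lt, Hh0).
  replace ((f h - f 0) / h - L) with ((f h - (f 0 + L * h)) / h) by (field; exact Hh0).
  unfold Rdiv; rewrite Rabs_mult, Rabs_inv.
  apply (Rmult_lt_reg_r (Rabs h)); [exact Hah |]; rewrite Rmult_assoc, Rinv_l, Rmult_1_r by lra.
  eapply Rle_lt_trans; [exact Hb |].
  assert (Rabs h * (Rabs C + 1) < eps).
  { assert (Hhe : Rabs h < eps / (Rabs C + 1)) by lra.
    apply (Rmult_lt_compat_r (Rabs C + 1)) in Hhe; [| pose proof (Rabs_pos C); lra].
    replace (eps / (Rabs C + 1) * (Rabs C + 1)) with eps in Hhe by (field; pose proof (Rabs_pos C); lra); lra. }
  pose proof (Rle_abs C); replace (Rabs h ^ 2) with (Rabs h * Rabs h) by ring; nra.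
Qed.

Lemma continuous_of_bigO_at0 (f : R -> R) : bigO_at0 f (fun _ => f 0) 1 -> continuous f 0.
Proof.
  intros (C & d & Hd & Hb); apply continuity_pt_filterlim; intros eps He.
  assert (HC : 0 < eps / (Rabs C + 1)) by (apply Rdiv_lt_0_compat; [| pose proof (Rabs_pos C)]; lra).
  exists (Rmin d (eps / (Rabs C + 1))); split; [apply Rmin_glb_lt; assumption |].
  intros y [_ Hy]; simpl in *; unfold R_dist in *; rewrite Rminus_0_r in Hy.
  pose proof (Rmin_l d (eps / (Rabs C + 1))); pose proof (Rmin_r d (eps / (Rabs C + 1))).
  specialize (Hb y ltac:(lra)); rewrite Rmult_1_r in Hb; eapply Rle_lt_trans; [exact Hb |].
  assert (Rabs y * (Rabs C + 1) < eps).
  { assert (Hye : Rabs y < eps / (Rabs C + 1)) by lra.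
    apply (Rmult_lt_compat_r (Rabs C + 1)) in Hye; [| pose proof (Rabs_pos C); lra].
    replace (eps / (Rabs C + 1) * (Rabs C + 1)) with eps in Hye by (field; pose proof (Rabs_pos C); lra); lra. }
  pose proof (Rle_abs C); pose proof (Rabs_pos y); nra.
Qed.

Definition odd_glue (h1 h2 : R -> R) (y : R) : R := if Rle_dec 0 y then h1 y else - h2 (- y).

Lemma odd_glue_reflect (g : R -> R) : g = odd_glue g (fun t => - g (- t)).
Proof.
  apply functional_extensionality; intros y; unfold odd_glue.
  destruct (Rle_dec 0 y); [reflexivity | rewrite !Ropp_involutive; reflexivity].
Qed.

Section Glue.

Variables H rho : R.
Hypothesis hH : 0 < H <= 1 / 2.
Hypothesis hrho : -1 < rho < 1.
Variables h1 h2 : R -> R.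
Hypothesis hh1 : half_solution H rho h1.
Hypothesis hh2 : half_solution H (- rho) h2.

Let g := odd_glue h1 h2.
Let b := beta H rho.

Let hrho_opp : -1 < - rho < 1.
Proof. lra. Qed.

Lemma glue_nonneg y : 0 <= y -> g y = h1 y.
Proof. intros Hy; unfold g, odd_glue; destruct (Rle_dec 0 y); [reflexivity | lra]. Qed.

Lemma glue_neg y : y < 0 -> g y = - h2 (- y).
Proof. intros Hy; unfold g, odd_glue; destruct (Rle_dec 0 y); [lra | reflexivity]. Qed.

Lemma glue_0 : g 0 = 0.
Proof. rewrite glue_nonneg by lra; apply hh1. Qed.

Lemma glue_is_derive_pos y : 0 < y -> is_derive g y (Derive h1 y).
Proof.
  intros Hy; apply (is_derive_ext_loc h1); [| apply Derive_correct, (half_ex_derive H rho hH hrho h1 hh1 y Hy)].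
  apply (filter_imp (fun t => 0 < t)); [intros t Ht; symmetry; apply glue_nonneg; lra | apply locally_pos, Hy].
Qed.

Lemma glue_is_derive_neg y : y < 0 -> is_derive g y (Derive h2 (- y)).
Proof.
  intros Hy; apply (is_derive_ext_loc (fun t => - h2 (- t))).
  - apply (filter_imp (fun t => t < 0)); [intros t Ht; symmetry; apply glue_neg, Ht | apply locally_neg, Hy].
  - apply is_derive_reflect, Derive_correct, (half_ex_derive H (- rho) hH hrho_opp h2 hh2); lra.
Qed.

Lemma glue_is_derive2_pos y : 0 < y -> is_derive (Derive g) y (Derive (Derive h1) y).
Proof.
  intros Hy; apply (is_derive_ext_loc (Derive h1));
    [| apply Derive_correct, (half_Derive_ex_derive H rho hH hrho h1 hh1 y Hy)].
  apply (filter_imp (fun t => 0 < t)); [| apply locally_pos, Hy].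
  intros t Ht; symmetry; apply is_derive_unique, glue_is_derive_pos, Ht.
Qed.

Lemma glue_is_derive2_neg y : y < 0 -> is_derive (Derive g) y (- Derive (Derive h2) (- y)).
Proof.
  intros Hy; apply (is_derive_ext_loc (fun t => Derive h2 (- t))).
  - apply (filter_imp (fun t => t < 0)); [| apply locally_neg, Hy].
    intros t Ht; symmetry; apply is_derive_unique, glue_is_derive_neg, Ht.
  - assert (ex_derive (Derive h2) (- y)) by (apply (half_Derive_ex_derive H (- rho) hH hrho_opp h2 hh2); lra).
    auto_derive; [assumption | change (fun x => Derive h2 x) with (Derive h2); ring].
Qed.

Lemma glue_bigO : bigO_at0 g (fun y => y + b * y ^ 2) 3.
Proof.
  apply bigO_at0_of_right; [rewrite glue_0; ring | |].
  - apply (bigO_right_ext (fun y => h1 y - (y + b * y ^ 2))); [| apply (half_bigO H rho hH hrho h1 hh1)].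
    refine (filter_imp _ _ _ at_right_pos); intros y Hy; rewrite glue_nonneg by lra; reflexivity.
  - apply (bigO_right_ext (fun y => - (h2 y - (y + beta H (- rho) * y ^ 2))));
      [| apply bigO_right_opp, (half_bigO H (- rho) hH hrho_opp h2 hh2)].
    refine (filter_imp _ _ _ at_right_pos); intros y Hy.
    rewrite glue_neg, Ropp_involutive, beta_opp by lra; unfold b; ring.
Qed.

Lemma glue_is_derive_0 : is_derive g 0 1.
Proof.
  apply is_derive_of_bigO_at0.
  apply bigO_at0_of_right; [ring | |].
  - apply (bigO_right_ext (fun y => (h1 y - (y + b * y ^ 2)) + b * y ^ 2));
      [| apply bigO_right_plus; [apply (bigO_right_S _ 2), (half_bigO H rho hH hrho h1 hh1) |
          apply (bigO_right_mult _ _ 0 2); [apply bigO_right_const | apply bigO_right_pow]]].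
    refine (filter_imp _ _ _ at_right_pos); intros y Hy; rewrite glue_0, glue_nonneg by lra; ring.
  - apply (bigO_right_ext (fun y => - (h2 y - (y + beta H (- rho) * y ^ 2)) + b * y ^ 2));
      [| apply bigO_right_plus;
           [apply bigO_right_opp, (bigO_right_S _ 2), (half_bigO H (- rho) hH hrho_opp h2 hh2) |
          apply (bigO_right_mult _ _ 0 2); [apply bigO_right_const | apply bigO_right_pow]]].
    refine (filter_imp _ _ _ at_right_pos); intros y Hy.
    rewrite glue_0, glue_neg, Ropp_involutive, beta_opp by lra; unfold b; ring.
Qed.

Lemma glue_Derive_0 : Derive g 0 = 1.
Proof. apply is_derive_unique, glue_is_derive_0. Qed.

Lemma glue_Derive_bigO : bigO_at0 (Derive g) (fun y => 1 + 2 * b * y) 2.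
Proof.
  apply bigO_at0_of_right; [rewrite glue_Derive_0; ring | |].
  - apply (bigO_right_ext (fun y => Derive h1 y - barrier_der H rho 0 y));
      [| apply (half_Derive_bigO H rho hH hrho h1 hh1)].
    refine (filter_imp _ _ _ at_right_pos); intros y Hy.
    rewrite (is_derive_unique _ _ _ (glue_is_derive_pos y Hy)); unfold barrier_der, b; ring.
  - apply (bigO_right_ext (fun y => Derive h2 y - barrier_der H (- rho) 0 y));
      [| apply (half_Derive_bigO H (- rho) hH hrho_opp h2 hh2)].
    refine (filter_imp _ _ _ at_right_pos); intros y Hy.
    rewrite (is_derive_unique _ _ _ (glue_is_derive_neg (- y) ltac:(lra))), Ropp_involutive.
    unfold barrier_der; rewrite beta_opp by lra; unfold b; ring.
Qed.

Lemma glue_is_derive2_0 : is_derive (Derive g) 0 (2 * b).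
Proof. apply is_derive_of_bigO_at0; rewrite glue_Derive_0; exact glue_Derive_bigO. Qed.

Lemma glue_Derive2_0 : Derive (Derive g) 0 = 2 * b.
Proof. apply is_derive_unique, glue_is_derive2_0. Qed.

Lemma glue_Derive2_bigO : bigO_at0 (Derive (Derive g)) (fun _ => 2 * b) 1.
Proof.
  apply bigO_at0_of_right; [exact glue_Derive2_0 | |].
  - apply (bigO_right_ext (fun y => Derive (Derive h1) y - 2 * beta H rho));
      [| apply (half_Derive2_bigO H rho hH hrho h1 hh1)].
    refine (filter_imp _ _ _ at_right_pos); intros y Hy.
    rewrite (is_derive_unique _ _ _ (glue_is_derive2_pos y Hy)); reflexivity.
  - apply (bigO_right_ext (fun y => - (Derive (Derive h2) y - 2 * beta H (- rho))));
      [| apply bigO_right_opp, (half_Derive2_bigO H (- rho) hH hrho_opp h2 hh2)].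
    refine (filter_imp _ _ _ at_right_pos); intros y Hy.
    rewrite (is_derive_unique _ _ _ (glue_is_derive2_neg (- y) ltac:(lra))), Ropp_involutive.
    rewrite beta_opp by lra; unfold b; ring.
Qed.

Lemma glue_ex_derive y : ex_derive g y.
Proof.
  destruct (Rtotal_order y 0) as [Hy | [-> | Hy]]; eexists;
    [apply glue_is_derive_neg, Hy | apply glue_is_derive_0 | apply glue_is_derive_pos, Hy].
Qed.

Lemma glue_Derive_ex_derive y : ex_derive (Derive g) y.
Proof.
  destruct (Rtotal_order y 0) as [Hy | [-> | Hy]]; eexists;
    [apply glue_is_derive2_neg, Hy | apply glue_is_derive2_0 | apply glue_is_derive2_pos, Hy].
Qed.

Lemma glue_Derive2_cont y : continuous (Derive (Derive g)) y.
Proof.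
  destruct (Rtotal_order y 0) as [Hy | [-> | Hy]].
  - apply (continuous_ext_loc _ (fun t => - Derive (Derive h2) (- t))).
    + apply (filter_imp (fun t => t < 0)); [| apply locally_neg, Hy].
      intros t Ht; symmetry; apply is_derive_unique, glue_is_derive2_neg, Ht.
    + apply (continuous_comp (fun t => - t) (fun s => - Derive (Derive h2) s));
        [apply continuous_of_ex_derive; auto_derive; auto |].
      apply (continuous_opp (V := R_NormedModule)), (half_Derive2_cont H (- rho) hH hrho_opp h2 hh2); lra.
  - apply continuous_of_bigO_at0; rewrite glue_Derive2_0; exact glue_Derive2_bigO.
  - apply (continuous_ext_loc _ (Derive (Derive h1))).
    + apply (filter_imp (fun t => 0 < t)); [| apply locally_pos, Hy].
      intros t Ht; symmetry; apply is_derive_unique, glue_is_derive2_pos, Ht.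
    + apply (half_Derive2_cont H rho hH hrho h1 hh1), Hy.
Qed.

Lemma glue_C2 : C2 g.
Proof.
  split; split; [apply glue_ex_derive | | apply glue_Derive_ex_derive | apply glue_Derive2_cont].
  intros y; apply continuous_of_ex_derive, glue_Derive_ex_derive.
Qed.

Lemma glue_ode y : y <> 0 -> ode_at H rho g y.
Proof.
  intros Hy0; apply ode_at_iff; destruct (Rtotal_order y 0) as [Hy | [Hy | Hy]]; [| lra |].
  - rewrite (is_derive_unique _ _ _ (glue_is_derive_neg y Hy)), glue_neg by exact Hy.
    pose proof (half_pos H (- rho) hH hrho_opp h2 hh2 (- y) ltac:(lra)); split; [lra |].
    rewrite <- residual_opp, Ropp_involutive; apply (half_residual H (- rho) hH hrho_opp h2 hh2); lra.
  - rewrite (is_derive_unique _ _ _ (glue_is_derive_pos y Hy)), glue_nonneg by lra.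
    pose proof (half_pos H rho hH hrho h1 hh1 y Hy); split; [lra |].
    apply (half_residual H rho hH hrho h1 hh1), Hy.
Qed.

Lemma glue_sign y : y <> 0 -> 0 < g y / y.
Proof.
  intros Hy0; destruct (Rtotal_order y 0) as [Hy | [Hy | Hy]]; [| lra |].
  - rewrite glue_neg by exact Hy; pose proof (half_pos H (- rho) hH hrho_opp h2 hh2 (- y) ltac:(lra)).
    replace (- h2 (- y) / y) with (h2 (- y) / - y) by (field; lra); apply Rdiv_lt_0_compat; lra.
  - rewrite glue_nonneg by lra; apply Rdiv_lt_0_compat; [apply (half_pos H rho hH hrho h1 hh1) |]; lra.
Qed.

Theorem odd_glue_properties :
  is_solution H rho g /\ C2 g /\
  bigO_at0 g (fun y => Derive g 0 * y + Derive (Derive g) 0 * (y ^ 2 / 2)) 3 /\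
  bigO_at0 (Derive g) (fun y => Derive g 0 + Derive (Derive g) 0 * y) 2 /\
  bigO_at0 (Derive (Derive g)) (fun _ => Derive (Derive g) 0) 1 /\
  (forall y, y <> 0 -> 0 < g y / y).
Proof.
  rewrite glue_Derive_0, glue_Derive2_0.
  split; [| split; [exact glue_C2 |]].
  - split; [apply glue_C2 |]; split; [exact glue_0 |]; split; [rewrite glue_Derive_0; lra | exact glue_ode].
  - split; [| split; [exact glue_Derive_bigO | split; [exact glue_Derive2_bigO | exact glue_sign]]].
    replace (fun y => 1 * y + 2 * b * (y ^ 2 / 2)) with (fun y => y + b * y ^ 2)
      by (apply functional_extensionality; intros; field).
    exact glue_bigO.
Qed.

End Glue.

Section Solutions.

Variables H rho : R.
Hypothesis hH : 0 < H <= 1 / 2.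
Hypothesis hrho : -1 < rho < 1.
Variable g : R -> R.
Hypothesis hg : is_solution H rho g.

Lemma solution_residual y : y <> 0 -> residual H rho y (g y) (Derive g y) = 0.
Proof. intros Hy; destruct hg as (_ & _ & _ & Hode); apply ode_at_iff, Hode, Hy. Qed.

Lemma solution_Derive_neq0 y : y <> 0 -> Derive g y <> 0.
Proof.
  intros Hy Hd; pose proof (solution_residual y Hy) as R.
  unfold residual, quad_residual in R; rewrite Hd in R; lra.
Qed.

(* [g'] cannot vanish away from 0, and [g'(0) > 0], so [g' > 0] by the intermediate value theorem. *)
Lemma solution_Derive_pos y : 0 < Derive g y.
Proof.
  destruct hg as ((_ & Hc) & _ & H0 & _).
  destruct (Rlt_le_dec 0 (Derive g y)) as [| Hle]; [assumption | exfalso].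
  destruct (IVT_gen (Derive g) y 0 0) as (z & Hz & Ez).
  - intros x; apply continuity_pt_filterlim, Hc.
  - split; [apply (Rle_trans _ (Derive g y)); [apply Rmin_l | lra] |
      apply (Rle_trans _ (Derive g 0)); [lra | apply Rmax_r]].
  - assert (z <> 0) by (intros ->; lra); apply (solution_Derive_neq0 z); assumption.
Qed.

Lemma solution_increasing a b : a < b -> g a < g b.
Proof.
  intros Hab; destruct (MVT_cor2 g (Derive g) a b Hab) as (c & E & _).
  - intros c _; apply is_derive_Reals, Derive_correct, (proj1 (proj1 hg)).
  - pose proof (solution_Derive_pos c); assert (0 < Derive g c * (b - a)) by (apply Rmult_lt_0_compat; lra).
    lra.
Qed.

Lemma solution_half : half_solution H rho g.
Proof.
  destruct hg as ((Hd & _) & H0 & _).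
  split; [exact H0 |]; split.
  - pose proof (continuous_at_right g (continuous_of_ex_derive g 0 (Hd 0))) as Hc.
    rewrite H0 in Hc; exact Hc.
  - intros y Hy; pose proof (solution_increasing 0 y Hy); rewrite H0 in *.
    repeat split; [lra | apply Hd | apply solution_Derive_pos | apply solution_residual; lra].
Qed.

Lemma solution_reflect_half : half_solution H (- rho) (fun t => - g (- t)).
Proof.
  destruct hg as ((Hd & _) & H0 & _).
  assert (HD : forall y, Derive (fun t => - g (- t)) y = Derive g (- y))
    by (intros y; apply is_derive_unique, is_derive_reflect, Derive_correct, Hd).
  split; [rewrite Ropp_0, H0; ring |]; split.
  - replace 0 with (- g (- 0)) at 2 by (rewrite Ropp_0, H0; ring).
    apply (continuous_at_right (fun t => - g (- t))), continuous_of_ex_derive.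
    eexists; apply is_derive_reflect, Derive_correct, Hd.
  - intros y Hy; pose proof (solution_increasing (- y) 0 ltac:(lra)); rewrite H0 in *; rewrite HD.
    repeat split; [lra | eexists; apply is_derive_reflect, Derive_correct, Hd | apply solution_Derive_pos |].
    rewrite <- (Ropp_involutive y) at 1; rewrite residual_opp; apply solution_residual; lra.
Qed.

End Solutions.

Theorem lemmaA2 (H rho : R) (hH : 0 < H <= 1 / 2) (hrho : -1 < rho < 1) :
  (exists g : R -> R, is_solution H rho g) /\
  (forall g1 g2 : R -> R, is_solution H rho g1 -> is_solution H rho g2 ->
     forall y, g1 y = g2 y) /\
  (forall g : R -> R, is_solution H rho g ->
     C2 g /\
     bigO_at0 g (fun y => Derive g 0 * y
                          + Derive (Derive g) 0 * (y ^ 2 / 2)) 3 /\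
     bigO_at0 (Derive g) (fun y => Derive g 0 + Derive (Derive g) 0 * y) 2 /\
     bigO_at0 (Derive (Derive g)) (fun _ => Derive (Derive g) 0) 1 /\
     (forall y, y <> 0 -> 0 < g y / y)).
Proof.
  assert (hrho' : -1 < - rho < 1) by lra.
  split; [| split].
  - destruct (half_solution_exists H rho hH hrho) as [h1 Hh1].
    destruct (half_solution_exists H (- rho) hH hrho') as [h2 Hh2].
    exists (odd_glue h1 h2); apply (odd_glue_properties H rho hH hrho h1 h2 Hh1 Hh2).
  - intros g1 g2 Hg1 Hg2 y; destruct (Rle_lt_dec 0 y) as [Hy | Hy].
    + apply (half_solution_unique H rho); try apply solution_half; assumption.
    + pose proof (half_solution_unique H (- rho) _ _ hH hrho' (solution_reflect_half H rho hH hrho g1 Hg1)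
        (solution_reflect_half H rho hH hrho g2 Hg2) (- y) ltac:(lra)) as E.
      simpl in E; rewrite Ropp_involutive in E; lra.
  - intros g Hg; rewrite (odd_glue_reflect g).
    apply (odd_glue_properties H rho hH hrho); [apply solution_half | apply solution_reflect_half]; assumption.
Qed.
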